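(* Let $T\in\mathcal{T}_h^\Gamma$ and $r_T=|L_T|$. For every polynomial $v\in\mathbb{P}^k(T)$ (extended polynomially to $\mathbb{R}^2$) and $j=0,1$, $$h_T^j\|D^jv\|_{L^\infty(T)}\le C\,h_T^k\sum_{\ell=0}^k\frac{1}{r_T^{\ell}}\max_{0\le i\le\ell}\big|D_{\eta}^{k-\ell}v(x_i^{\ell,T})\big|,$$ where $C$ depends only on the shape regularity of $T$, on $k$, and on the regularity of $\Gamma$.
   Context: $\Omega\subset\mathbb{R}^2$ is a polygonal domain containing a smooth closed curve $\Gamma$ enclosing the open set $\Omega^-$; $\Omega^+=\Omega\setminus\overline{\Omega^-}$. $\mathcal{T}_h$ is a shape-regular, quasi-uniform triangulation of $\Omega$, $h_T=\operatorname{diam}T$, and $k\ge1$ is an integer. Standing assumption: $\Gamma$ meets the boundary of each triangle in at most two points, and if in exactly two points they lie on different edges. $\mathcal{T}_h^\Gamma$ is the set of $T\in\mathcal{T}_h$ with $T\cap\Gamma\ne\emptyset$. For $T\in\mathcal{T}_h^\Gamma$: $y_T,z_T$ are the two endpoints of $T\cap\Gamma$, $L_T$ is the segment joining them, $T^\pm=T\cap\Omega^\pm$, $\eta$ is the unit vector perpendicular to $L_T$ pointing out of $T^-$, and $\tau$ is $\eta$ rotated by $90^\circ$ counterclockwise; $D_\eta$ denotes the directional derivative in direction $\eta$. For $\ell=0,\dots,k$, $\{\bar x_i^{\ell,T}\}_{i=0}^{\ell}$ are the $\ell+1$ Gauss–Legendre points of the segment $L_T$, and $x_i^{\ell,T}$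 is the intersection of $\Gamma$ with the line through $\bar x_i^{\ell,T}$ perpendicular to $L_T$. *)

From Stdlib Require Import Reals Lra.
Open Scope R_scope.

Definition pt := (R * R)%type.
Definition padd (p q : pt) : pt := (fst p + fst q, snd p + snd q).
Definition psub (p q : pt) : pt := (fst p - fst q, snd p - snd q).
Definition pscale (t : R) (p : pt) : pt := (t * fst p, t * snd p).
Definition pdot (p q : pt) : R := fst p * fst q + snd p * snd q.
Definition pnorm (p : pt) : R := sqrt (pdot p p).
Definition pdist (p q : pt) : R := pnorm (psub p q).

Definition cross (p q : pt) : R := fst p * snd q - snd p * fst q.
Definition nondegenerate (a b c : pt) : Prop := cross (psub b a) (psub c a) <> 0.

Definition in_tri (a b c p : pt) : Prop :=
  exists l1 l2 l3 : R, 0 <= l1 /\ 0 <= l2 /\ 0 <= l3 /\ l1 + l2 + l3 = 1 /\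
    p = padd (pscale l1 a) (padd (pscale l2 b) (pscale l3 c)).

Definition in_seg (p q x : pt) : Prop :=
  exists t : R, 0 <= t <= 1 /\ x = padd p (pscale t (psub q p)).

Definition on_bdry (a b c x : pt) : Prop :=
  in_seg a b x \/ in_seg b c x \/ in_seg c a x.

Definition same_edge (a b c x y : pt) : Prop :=
  (in_seg a b x /\ in_seg a b y) \/ (in_seg b c x /\ in_seg b c y) \/
  (in_seg c a x /\ in_seg c a y).

(** h_T = diam T (= longest edge) *)
Definition diamT (a b c : pt) : R := Rmax (pdist a b) (Rmax (pdist b c) (pdist c a)).

(** inradius rho_T = 2 |T| / perimeter *)
Definition inradius (a b c : pt) : R :=
  Rabs (cross (psub b a) (psub c a)) / (pdist a b + pdist b c + pdist c a).

Definition shape_reg (sigma : R) (a b c : pt) : Prop :=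
  diamT a b c <= sigma * inradius a b c.

Definition smooth (f : R -> R) : Prop :=
  exists D : nat -> R -> R, D 0%nat = f /\
    forall (n : nat) (x : R), derivable_pt_lim (D n) x (D (S n) x).

(** gamma is a C^infinity, regular, 1-periodic curve, injective on [0,1):
    a smooth simple closed curve Gamma = gamma([0,1]). *)
Definition smooth_closed_curve (g1 g2 : R -> R) : Prop :=
  smooth g1 /\ smooth g2 /\
  (forall s, g1 (s + 1) = g1 s /\ g2 (s + 1) = g2 s) /\
  (forall s d1 d2, derivable_pt_lim g1 s d1 -> derivable_pt_lim g2 s d2 ->
      (d1, d2) <> (0, 0)) /\
  (forall s t, 0 <= s < 1 -> 0 <= t < 1 -> g1 s = g1 t -> g2 s = g2 t -> s = t).

Definition on_curve (g1 g2 : R -> R) (x : pt) : Prop :=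
  exists s : R, x = (g1 s, g2 s).

(** Legendre polynomials via Bonnet's recursion:
    P_0 = 1, P_1 = x, (n+2) P_(n+2) = (2n+3) x P_(n+1) - (n+1) P_n. *)
Fixpoint legendre_pair (n : nat) (x : R) : R * R :=
  (* returns (P_n x, P_(n+1) x) *)
  match n with
  | O => (1, x)
  | S m => let (p, q) := legendre_pair m x in
           (q, ((2 * INR m + 3) * x * q - (INR m + 1) * p) / (INR m + 2))
  end.
Definition legendre (n : nat) (x : R) : R := fst (legendre_pair n x).

(** g : 'I_(l+1) -> R (as nat -> R) lists the l+1 Gauss--Legendre nodes
    on [-1,1] (the roots of P_(l+1)), in increasing order. *)
Definition GL_nodes (l : nat) (g : nat -> R) : Prop :=
  (forall i, (i <= l)%nat -> legendre (S l) (g i) = 0) /\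
  (forall i j, (i < j <= l)%nat -> g i < g j).

Definition GL_point (y z : pt) (t : R) : pt :=
  padd y (pscale ((1 + t) / 2) (psub z y)).

(** A bivariate polynomial is given by its coefficients: c a b is the
    coefficient of x^a y^b.  It lies in P^k iff c a b = 0 when a + b > k. *)
Definition poly2 := nat -> nat -> R.

Definition deg_le (k : nat) (c : poly2) : Prop :=
  forall a b : nat, (k < a + b)%nat -> c a b = 0.

(** evaluation (all monomials with a, b <= k; enough for degree <= k) *)
Definition peval (k : nat) (c : poly2) (p : pt) : R :=
  sum_f_R0 (fun a => sum_f_R0 (fun b => c a b * fst p ^ a * snd p ^ b) k) k.

Definition pdx (c : poly2) : poly2 := fun a b => INR (S a) * c (S a) b.
Definition pdy (c : poly2) : poly2 := fun a b => INR (S b) * c a (S b).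

Definition pdir (e : pt) (c : poly2) : poly2 :=
  fun a b => fst e * pdx c a b + snd e * pdy c a b.
Definition pdirn (m : nat) (e : pt) (c : poly2) : poly2 := Nat.iter m (pdir e) c.

Definition gradnorm (k : nat) (c : poly2) (p : pt) : R :=
  sqrt (peval k (pdx c) p ^ 2 + peval k (pdy c) p ^ 2).

Fixpoint fmax (n : nat) (f : nat -> R) : R :=
  match n with
  | O => f O
  | S m => Rmax (fmax m f) (f (S m))
  end.

From Stdlib Require Import Reals Lra Lia FunctionalExtensionality ZArith Classical.
Open Scope R_scope.

(* Work in the frame of L_T: origin y_T, tangent e = (z_T - y_T) / r_T and normal eta.  Since
   v is a polynomial of degree k, its exact Taylor expansion at y_T bounds v and Dv on T by
   the coefficients D_e^p D_eta^j v(y_T) weighted by h_T^(j+p).  The curve is flat at the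
   scale of T: every x_i^{l,T} lies within O(r_T^2) of the Gauss point of L_T it projects to.
   So, up to coefficients of lower level times powers of r_T, the data D_eta^(k-l) v(x_i^{l,T})
   are the values at the l + 1 Gauss points of the univariate polynomial t -> D_eta^(k-l)
   v(y_T + t e) of degree l, whose coefficients are recovered by interpolation on these fixed,
   separated nodes.  Induction on the level l bounds every coefficient by r_T^(k-j-p) times
   the data sum. *)

Lemma sum_f_R0_eq_0 (f : nat -> R) n :
  (forall i, (i <= n)%nat -> f i = 0) -> sum_f_R0 f n = 0.
Proof.
  induction n as [|n IH]; intros H; simpl.
  - apply H; lia.
  - rewrite IH, H; [ring|lia|]. intros; apply H; lia.
Qed.

Lemma sum_f_R0_shift (F G : nat -> R) (n : nat) :
  (0 < n)%nat -> F 0%nat = 0 -> G n = 0 -> (forall i, (i < n)%nat -> F (S i) = G i) ->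
  sum_f_R0 F n = sum_f_R0 G n.
Proof.
  intros Hn HF0 HGn HFG.
  rewrite decomp_sum, HF0, Rplus_0_l by lia.
  destruct n as [|n]; [lia|]. simpl pred.
  rewrite tech5, HGn, Rplus_0_r.
  apply sum_eq. intros i Hi. apply HFG. lia.
Qed.

Lemma sum_f_R0_lincomb (f g : nat -> R) al be n :
  sum_f_R0 (fun i => al * f i + be * g i) n = al * sum_f_R0 f n + be * sum_f_R0 g n.
Proof. induction n as [|n IH]; simpl; [ring|rewrite IH; ring]. Qed.

Lemma sum_f_R0_abs_le (f : nat -> R) n c :
  (forall i, (i <= n)%nat -> Rabs (f i) <= c) -> Rabs (sum_f_R0 f n) <= INR (S n) * c.
Proof.
  intros H. eapply Rle_trans; [apply sum_f_R0_triangle|].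
  eapply Rle_trans; [apply (sum_Rle _ (fun _ => c)); auto|]. rewrite sum_cte. lra.
Qed.

Lemma sum_f_R0_ge_term (f : nat -> R) n j :
  (forall i, (i <= n)%nat -> 0 <= f i) -> (j <= n)%nat -> f j <= sum_f_R0 f n.
Proof.
  revert j. induction n as [|n IH]; intros j H Hj; simpl.
  - replace j with 0%nat by lia. lra.
  - assert (IHn : forall i, (i <= n)%nat -> f i <= sum_f_R0 f n)
      by (intros i Hi; apply IH; auto).
    pose proof (H 0%nat ltac:(lia)). pose proof (IHn 0%nat ltac:(lia)).
    pose proof (H (S n) (le_n _)).
    destruct (Nat.eq_dec j (S n)) as [->|Hne]; [lra|].
    pose proof (IHn j ltac:(lia)). lra.
Qed.

Lemma derivable_pt_lim_eq (f : R -> R) x l l' :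
  derivable_pt_lim f x l -> l = l' -> derivable_pt_lim f x l'.
Proof. intros H ->; exact H. Qed.

Lemma derivable_pt_lim_sum_f_R0 (f f' : nat -> R -> R) (n : nat) (x : R) :
  (forall i, (i <= n)%nat -> derivable_pt_lim (f i) x (f' i x)) ->
  derivable_pt_lim (fun x => sum_f_R0 (fun i => f i x) n) x (sum_f_R0 (fun i => f' i x) n).
Proof.
  induction n as [|n IH]; intros H; simpl.
  - apply H. lia.
  - apply (derivable_pt_lim_plus (fun x => sum_f_R0 (fun i => f i x) n) (f (S n))).
    + apply IH. intros; apply H; lia.
    + apply H; lia.
Qed.

Lemma derivable_pt_lim_affine (f g : R -> R) x a b al be de :
  derivable_pt_lim f x a -> derivable_pt_lim g x b ->
  derivable_pt_lim (fun u => al + be * f u + de * g u) x (be * a + de * b).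
Proof.
  intros Hf Hg.
  pose proof (derivable_pt_lim_plus _ _ x _ _
    (derivable_pt_lim_plus _ _ x _ _ (derivable_pt_lim_const al x)
       (derivable_pt_lim_scal f be x a Hf))
    (derivable_pt_lim_scal g de x b Hg)) as H.
  unfold plus_fct, mult_real_fct in H; cbv beta in H.
  eapply derivable_pt_lim_eq; [exact H|ring].
Qed.

Lemma derivable_pt_lim_pow_affine (q w : R) (n : nat) (x : R) :
  derivable_pt_lim (fun x => (q + x * w) ^ n) x (INR n * (q + x * w) ^ pred n * w).
Proof.
  change (fun x => (q + x * w) ^ n) with (comp (fun y => y ^ n) (fun x => q + x * w)).
  apply derivable_pt_lim_comp; [|apply derivable_pt_lim_pow].
  pose proof (derivable_pt_lim_mult (fun x => x) (fun _ => w) x 1 0 (derivable_pt_lim_id x)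
    (derivable_pt_lim_const w x)) as H1.
  pose proof (derivable_pt_lim_plus (fun _ => q) _ x 0 _ (derivable_pt_lim_const q x) H1) as H.
  unfold plus_fct, mult_fct in H; cbv beta in H.
  eapply derivable_pt_lim_eq; [exact H|ring].
Qed.

Lemma zero_derivative_const (g : R -> R) :
  (forall x, derivable_pt_lim g x 0) -> forall x, g x = g 0.
Proof.
  intros H x. destruct (Rtotal_order x 0) as [Hx|[Hx|Hx]].
  - destruct (MVT_cor2 g (fun _ => 0) x 0 Hx (fun c _ => H c)) as [c [Hc _]]. lra.
  - subst; reflexivity.
  - destruct (MVT_cor2 g (fun _ => 0) 0 x Hx (fun c _ => H c)) as [c [Hc _]]. lra.
Qed.

Lemma mvt_lipschitz (f f' : R -> R) lo hi M :
  (forall u, lo <= u <= hi -> derivable_pt_lim f u (f' u)) ->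
  (forall u, lo <= u <= hi -> Rabs (f' u) <= M) ->
  forall u v, lo <= u <= hi -> lo <= v <= hi -> Rabs (f u - f v) <= M * Rabs (u - v).
Proof.
  intros Hd Hb.
  assert (Hlt : forall u v, lo <= u <= hi -> lo <= v <= hi -> u < v ->
            Rabs (f u - f v) <= M * Rabs (u - v)).
  { intros u v Hu Hv H.
    destruct (MVT_cor2 f f' u v H (fun c Hc => Hd c ltac:(lra))) as [c [Hc Hc']].
    rewrite <- Rabs_Ropp, Ropp_minus_distr, Hc, Rabs_mult, <- (Rabs_Ropp (u - v)),
      Ropp_minus_distr.
    apply Rmult_le_compat_r; [apply Rabs_pos|]. apply Hb; lra. }
  intros u v Hu Hv. destruct (Rtotal_order u v) as [H|[->|H]]; auto.
  - rewrite !Rminus_diag_eq, Rabs_R0 by reflexivity. lra.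
  - rewrite <- Rabs_Ropp, Ropp_minus_distr, <- (Rabs_Ropp (u - v)), Ropp_minus_distr. auto.
Qed.

Lemma taylor_finite (n : nat) : forall (f : nat -> R -> R),
  (forall j x, derivable_pt_lim (f j) x (f (S j) x)) -> (forall x, f (S n) x = 0) ->
  forall x, f 0%nat x = sum_f_R0 (fun j => f j 0 / INR (fact j) * x ^ j) n.
Proof.
  induction n as [|n IH]; intros f Hd Hz x.
  - simpl. assert (Hc : forall x, derivable_pt_lim (f 0%nat) x 0).
    { intros u. eapply derivable_pt_lim_eq; [apply Hd|apply Hz]. }
    rewrite (zero_derivative_const _ Hc x). field.
  - pose proof (IH (fun j => f (S j)) (fun j x => Hd (S j) x) Hz) as IH'.
    set (g := fun x => f 0%nat x - sum_f_R0 (fun j => f j 0 / INR (fact j) * x ^ j) (S n)).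
    assert (Hg : forall x, derivable_pt_lim g x 0).
    { intros u. unfold g. eapply derivable_pt_lim_eq.
      - apply derivable_pt_lim_minus; [apply Hd|].
        apply (derivable_pt_lim_sum_f_R0 (fun j x => f j 0 / INR (fact j) * x ^ j)
                 (fun j x => f j 0 / INR (fact j) * (INR j * x ^ pred j))).
        intros j _. apply derivable_pt_lim_scal, derivable_pt_lim_pow.
      - rewrite IH', (decomp_sum _ (S n)) by lia. simpl pred.
        replace (f 0%nat 0 / INR (fact 0) * (INR 0 * u ^ 0)) with 0 by (simpl; field).
        rewrite Rplus_0_l. apply Rminus_diag_eq, sum_eq. intros j _.
        rewrite fact_simpl, mult_INR. simpl pred.
        field. split; [apply INR_fact_neq_0|apply not_0_INR; lia]. }
    pose proof (zero_derivative_const g Hg x) as Hx. unfold g in Hx.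
    assert (H0 : sum_f_R0 (fun j => f j 0 / INR (fact j) * 0 ^ j) (S n) = f 0%nat 0).
    { rewrite decomp_sum, sum_f_R0_eq_0 by (intros; simpl; ring || lia). simpl; field. }
    rewrite H0 in Hx. lra.
Qed.

(** * Bivariate polynomials along lines *)

Definition pzero (c : poly2) : Prop := forall a b, c a b = 0.

Lemma deg_le_mono n m c : (n <= m)%nat -> deg_le n c -> deg_le m c.
Proof. intros Hnm H a b Hab; apply H; lia. Qed.

Lemma pzero_deg_le n c : pzero c -> deg_le n c.
Proof. intros H a b _; apply H. Qed.

Lemma deg_le_pdir n e c : deg_le (S n) c -> deg_le n (pdir e c).
Proof. intros H a b Hab. unfold pdir, pdx, pdy. rewrite !H by lia. ring. Qed.

Lemma pzero_pdir_deg0 e c : deg_le 0 c -> pzero (pdir e c).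
Proof. intros H a b. unfold pdir, pdx, pdy. rewrite !H by lia. ring. Qed.

Lemma pzero_pdir e c : pzero c -> pzero (pdir e c).
Proof. intros H a b. unfold pdir, pdx, pdy. rewrite !H. ring. Qed.

Lemma pzero_pdirn n e c : pzero c -> pzero (pdirn n e c).
Proof. intros H. induction n as [|n IH]; [exact H|]. apply pzero_pdir, IH. Qed.

Lemma pdirn_add p q e c : pdirn p e (pdirn q e c) = pdirn (p + q) e c.
Proof. unfold pdirn. rewrite Nat.iter_add. reflexivity. Qed.

Lemma deg_le_pdirn n e c : deg_le n c -> forall j, (j <= n)%nat -> deg_le (n - j) (pdirn j e c).
Proof.
  intros H j. induction j as [|j IH]; intros Hj.
  - rewrite Nat.sub_0_r. exact H.
  - apply deg_le_pdir. replace (S (n - S j)) with (n - j)%nat by lia. apply IH; lia.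
Qed.

Lemma pzero_pdirn_gt n e c : deg_le n c -> forall j, (n < j)%nat -> pzero (pdirn j e c).
Proof.
  intros H j Hj. replace j with (j - S n + S n)%nat by lia.
  rewrite <- pdirn_add. apply pzero_pdirn, pzero_pdir_deg0.
  rewrite <- (Nat.sub_diag n). apply deg_le_pdirn; auto.
Qed.

Lemma deg_le_pdirn_same k e c : deg_le k c -> forall j, deg_le k (pdirn j e c).
Proof.
  intros H j. destruct (le_lt_dec j k) as [Hj|Hj].
  - apply (deg_le_mono (k - j)); [lia|]. apply deg_le_pdirn; auto.
  - apply pzero_deg_le, (pzero_pdirn_gt k); auto.
Qed.

Lemma peval_pzero k c p : pzero c -> peval k c p = 0.
Proof.
  intros H. unfold peval.
  apply sum_f_R0_eq_0; intros a _. apply sum_f_R0_eq_0; intros b _. rewrite H; ring.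
Qed.

Lemma peval_pdir k e c p :
  peval k (pdir e c) p = fst e * peval k (pdx c) p + snd e * peval k (pdy c) p.
Proof.
  unfold peval. rewrite <- sum_f_R0_lincomb. apply sum_eq; intros a _.
  rewrite <- sum_f_R0_lincomb. apply sum_eq; intros b _. unfold pdir. ring.
Qed.

Lemma pdir_comm e w c : pdir e (pdir w c) = pdir w (pdir e c).
Proof.
  apply functional_extensionality; intro a; apply functional_extensionality; intro b.
  unfold pdir, pdx, pdy. ring.
Qed.

Lemma pdirn_pdir_comm j e w c : pdirn j w (pdir e c) = pdir e (pdirn j w c).
Proof.
  induction j as [|j IH]; [reflexivity|]. simpl. rewrite IH. apply pdir_comm.
Qed.

Lemma pdirn_pdir p e c : pdirn p e (pdir e c) = pdirn (S p) e c.
Proof. unfold pdirn. rewrite Nat.iter_succ_r. reflexivity. Qed.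

(* The [pdx]/[pdy] coefficients are the chain-rule terms with the exponent shifted by one;
   [deg_le] kills the boundary terms of the shift. *)
Lemma peval_chain_rule_sum k (c : poly2) w1 w2 X Y : (0 < k)%nat -> deg_le k c ->
  sum_f_R0 (fun a => sum_f_R0 (fun b =>
    c a b * (INR a * X ^ pred a * w1) * Y ^ b + c a b * X ^ a * (INR b * Y ^ pred b * w2)) k) k
  = sum_f_R0 (fun a => sum_f_R0 (fun b =>
    (w1 * (INR (S a) * c (S a) b) + w2 * (INR (S b) * c a (S b))) * X ^ a * Y ^ b) k) k.
Proof.
  intros Hk Hd.
  transitivity (sum_f_R0 (fun a => sum_f_R0 (fun b => c a b * (INR a * X ^ pred a * w1) * Y ^ b) k) k
     + sum_f_R0 (fun a => sum_f_R0 (fun b => c a b * X ^ a * (INR b * Y ^ pred b * w2)) k) k).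
  { rewrite <- plus_sum. apply sum_eq; intros a _. apply plus_sum. }
  transitivity (sum_f_R0 (fun a => sum_f_R0 (fun b => w1 * (INR (S a) * c (S a) b) * X ^ a * Y ^ b) k) k
     + sum_f_R0 (fun a => sum_f_R0 (fun b => w2 * (INR (S b) * c a (S b)) * X ^ a * Y ^ b) k) k).
  2:{ rewrite <- plus_sum. apply sum_eq; intros a _. rewrite <- plus_sum.
      apply sum_eq; intros b _. ring. }
  f_equal.
  - apply sum_f_R0_shift; auto.
    + apply sum_f_R0_eq_0; intros b _. simpl. ring.
    + apply sum_f_R0_eq_0; intros b _. rewrite (Hd (S k) b) by lia. ring.
    + intros a Ha. apply sum_eq; intros b _. simpl pred. ring.
  - apply sum_eq; intros a _. apply sum_f_R0_shift; auto.
    + simpl. ring.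
    + rewrite (Hd a (S k)) by lia. ring.
    + intros b Hb. simpl pred. ring.
Qed.

Lemma derivable_pt_lim_peval_line (k : nat) (c : poly2) (q w : pt) (x : R) :
  (0 < k)%nat -> deg_le k c ->
  derivable_pt_lim (fun x => peval k c (padd q (pscale x w))) x
    (peval k (pdir w c) (padd q (pscale x w))).
Proof.
  intros Hk Hd. unfold peval, padd, pscale; simpl.
  eapply derivable_pt_lim_eq; [|unfold pdir, pdx, pdy; apply peval_chain_rule_sum; auto].
  set (X := fun x => fst q + x * fst w). set (Y := fun x => snd q + x * snd w).
  apply (derivable_pt_lim_sum_f_R0
    (fun a x => sum_f_R0 (fun b => c a b * X x ^ a * Y x ^ b) k)
    (fun a x => sum_f_R0 (fun b => c a b * (INR a * X x ^ pred a * fst w) * Y x ^ b +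
                                   c a b * X x ^ a * (INR b * Y x ^ pred b * snd w)) k)).
  intros a _. apply (derivable_pt_lim_sum_f_R0 (fun b x => c a b * X x ^ a * Y x ^ b)
    (fun b x => c a b * (INR a * X x ^ pred a * fst w) * Y x ^ b +
                c a b * X x ^ a * (INR b * Y x ^ pred b * snd w))).
  intros b _.
  pose proof (derivable_pt_lim_mult _ _ x _ _
    (derivable_pt_lim_scal _ (c a b) x _ (derivable_pt_lim_pow_affine (fst q) (fst w) a x))
    (derivable_pt_lim_pow_affine (snd q) (snd w) b x)) as H.
  unfold mult_fct, mult_real_fct in H; cbv beta in H.
  unfold X, Y. eapply derivable_pt_lim_eq; [exact H|]. ring.
Qed.

Lemma taylor_line k c q w x : (0 < k)%nat -> deg_le k c ->
  peval k c (padd q (pscale x w)) =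
  sum_f_R0 (fun j => peval k (pdirn j w c) q / INR (fact j) * x ^ j) k.
Proof.
  intros Hk Hd.
  pose (f := fun j x => peval k (pdirn j w c) (padd q (pscale x w))).
  assert (Hq : padd q (pscale 0 w) = q).
  { unfold padd, pscale. destruct q; simpl; f_equal; ring. }
  transitivity (f 0%nat x); [reflexivity|]. rewrite (taylor_finite k f).
  - apply sum_eq; intros j _. unfold f. rewrite Hq. reflexivity.
  - intros j u. apply derivable_pt_lim_peval_line; auto. apply deg_le_pdirn_same; auto.
  - intros u. apply peval_pzero, (pzero_pdirn_gt k); auto.
Qed.

Lemma taylor_frame k w y e eta t s : (0 < k)%nat -> deg_le k w ->
  peval k w (padd (padd y (pscale t e)) (pscale s eta)) =
  sum_f_R0 (fun j => sum_f_R0 (fun p => peval k (pdirn p e (pdirn j eta w)) y / INR (fact p) * t ^ p) k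
                        / INR (fact j) * s ^ j) k.
Proof.
  intros Hk Hw. rewrite taylor_line; auto. apply sum_eq; intros j _.
  rewrite taylor_line; auto. apply deg_le_pdirn_same; auto.
Qed.

(** * Coefficients of a univariate polynomial from its values *)

Definition ueval (n : nat) (a : nat -> R) (t : R) : R := sum_f_R0 (fun p => a p * t ^ p) n.

Lemma ueval_S n a t : ueval (S n) a t = a 0%nat + t * ueval n (fun p => a (S p)) t.
Proof.
  induction n as [|n IH].
  - unfold ueval; simpl; ring.
  - unfold ueval in *. rewrite tech5, IH, (tech5 _ n). simpl. ring.
Qed.

Lemma ueval_0 n a : ueval n a 0 = a 0%nat.
Proof. destruct n as [|n]; [unfold ueval; simpl; ring|]. rewrite ueval_S. ring. Qed.

Lemma ueval_ext_deg n m a x : (n <= m)%nat -> (forall p, (n < p)%nat -> a p = 0) ->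
  ueval m a x = ueval n a x.
Proof.
  intros Hnm Ha. induction m as [|m IH].
  - replace n with 0%nat by lia. reflexivity.
  - destruct (Nat.eq_dec n (S m)) as [->|Hne]; [reflexivity|].
    unfold ueval in *. rewrite tech5, IH, Ha by lia. ring.
Qed.

(** Coefficients of the quotient of [ueval (S n) a] by [t - x0] (synthetic division). *)
Definition udiv (n : nat) (a : nat -> R) (x0 : R) : nat -> R :=
  fun p => sum_f_R0 (fun q => a (S (p + q)) * x0 ^ q) (n - p).

Lemma ueval_sub_factor n : forall a x0 t,
  ueval (S n) a t - ueval (S n) a x0 = (t - x0) * ueval n (udiv n a x0) t.
Proof.
  induction n as [|m IH]; intros a x0 t.
  - unfold ueval, udiv; simpl. ring.
  - rewrite (ueval_S (S m) a t), (ueval_S (S m) a x0), (ueval_S m (udiv (S m) a x0)).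
    replace (udiv (S m) a x0 0%nat) with (ueval (S m) (fun i => a (S i)) x0)
      by (unfold udiv, ueval; rewrite Nat.sub_0_r; reflexivity).
    transitivity ((t - x0) * ueval (S m) (fun i => a (S i)) x0 +
      t * (ueval (S m) (fun p => a (S p)) t - ueval (S m) (fun p => a (S p)) x0)); [ring|].
    rewrite IH. change (fun p => udiv (S m) a x0 (S p)) with (udiv m (fun i => a (S i)) x0).
    ring.
Qed.

Lemma udiv_coef_recover n a x0 p : (p < n)%nat ->
  a (S p) = udiv n a x0 p - x0 * udiv n a x0 (S p).
Proof.
  intros Hp. unfold udiv. rewrite (decomp_sum _ (n - p)) by lia.
  replace (pred (n - p)) with (n - S p)%nat by lia.
  rewrite Nat.add_0_r, scal_sum. simpl pow.
  replace (sum_f_R0 (fun i => a (S (p + S i)) * (x0 * x0 ^ i)) (n - S p)) with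
    (sum_f_R0 (fun i => a (S (S p + i)) * x0 ^ i * x0) (n - S p)); [ring|].
  apply sum_eq; intros i _. replace (p + S i)%nat with (S p + i)%nat by lia. ring.
Qed.

Lemma udiv_coef_last n a x0 : a (S n) = udiv n a x0 n.
Proof. unfold udiv. rewrite Nat.sub_diag. simpl. rewrite Nat.add_0_r. ring. Qed.

Lemma udiv_coef_first n a x0 : a 0%nat = ueval (S n) a x0 - x0 * udiv n a x0 0%nat.
Proof.
  pose proof (ueval_sub_factor n a x0 0) as H. rewrite !ueval_0 in H.
  unfold ueval in H |- *. lra.
Qed.

Lemma ucoef_zero_of_roots n : forall (a x : nat -> R),
  (forall i j, (i <= n)%nat -> (j <= n)%nat -> i <> j -> x i <> x j) ->
  (forall i, (i <= n)%nat -> ueval n a (x i) = 0) -> forall p, (p <= n)%nat -> a p = 0.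
Proof.
  induction n as [|n IH]; intros a x Hx Hr p Hp.
  - replace p with 0%nat by lia. pose proof (Hr 0%nat (le_n 0)) as H.
    unfold ueval in H. simpl in H. lra.
  - assert (Hq : forall p, (p <= n)%nat -> udiv n a (x 0%nat) p = 0).
    { apply (IH _ (fun i => x (S i))).
      - intros i j Hi Hj Hij. apply Hx; lia.
      - intros i Hi. pose proof (ueval_sub_factor n a (x 0%nat) (x (S i))) as H.
        rewrite !Hr in H by lia.
        assert (x (S i) - x 0%nat <> 0) by (apply Rminus_eq_contra, Hx; lia).
        apply (Rmult_eq_reg_l (x (S i) - x 0%nat)); auto. lra. }
    destruct p as [|p].
    + rewrite (udiv_coef_first n a (x 0%nat)), Hr, Hq by lia. ring.
    + destruct (Nat.eq_dec p n) as [->|Hne].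
      * rewrite (udiv_coef_last n a (x 0%nat)). apply Hq; lia.
      * rewrite (udiv_coef_recover n a (x 0%nat) p), !Hq by lia. ring.
Qed.

Lemma separated_nodes (x : nat -> R) n d : 0 < d ->
  (forall i, (i < n)%nat -> x i + d <= x (S i)) ->
  forall i j, (i < j <= n)%nat -> x i + d <= x j.
Proof.
  intros Hd H i j. induction j as [|j IH]; intros Hij; [lia|].
  destruct (Nat.eq_dec i j) as [->|Hne]; [apply H; lia|].
  pose proof (IH ltac:(lia)). pose proof (H j ltac:(lia)). lra.
Qed.

Lemma ucoef_bound_of_udiv n a x0 G Q V : 0 <= G -> 0 <= Q -> Rabs x0 <= G ->
  Rabs (ueval (S n) a x0) <= V -> (forall p, (p <= n)%nat -> Rabs (udiv n a x0 p) <= Q) ->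
  forall p, (p <= S n)%nat -> Rabs (a p) <= (1 + G) * Q + V.
Proof.
  intros HG HQ Hx0 HV Hq p Hp.
  assert (HxQ : forall p, (p <= n)%nat -> Rabs (x0 * udiv n a x0 p) <= G * Q).
  { intros p' Hp'. rewrite Rabs_mult. apply Rmult_le_compat; auto using Rabs_pos. }
  pose proof (Rmult_le_pos G Q HG HQ). pose proof (Rabs_pos (ueval (S n) a x0)).
  destruct p as [|p].
  - rewrite (udiv_coef_first n a x0). pose proof (HxQ 0%nat ltac:(lia)).
    pose proof (Rabs_triang (ueval (S n) a x0) (- (x0 * udiv n a x0 0%nat))).
    rewrite Rabs_Ropp in *. unfold Rminus. lra.
  - destruct (Nat.eq_dec p n) as [->|Hne].
    + rewrite (udiv_coef_last n a x0). pose proof (Hq n (le_n n)). lra.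
    + rewrite (udiv_coef_recover n a x0 p) by lia.
      pose proof (Hq p ltac:(lia)). pose proof (HxQ (S p) ltac:(lia)).
      pose proof (Rabs_triang (udiv n a x0 p) (- (x0 * udiv n a x0 (S p)))).
      rewrite Rabs_Ropp in *. unfold Rminus. lra.
Qed.

Lemma udiv_values_bound n a (x : nat -> R) d V : 0 < d ->
  (forall i, (i < S n)%nat -> x i + d <= x (S i)) ->
  (forall i, (i <= S n)%nat -> Rabs (ueval (S n) a (x i)) <= V) ->
  forall i, (i <= n)%nat -> Rabs (ueval n (udiv n a (x 0%nat)) (x (S i))) <= 2 * V / d.
Proof.
  intros Hd Hgap HV i Hi.
  pose proof (separated_nodes x (S n) d Hd Hgap 0%nat (S i) ltac:(lia)) as Hsep.
  pose proof (ueval_sub_factor n a (x 0%nat) (x (S i))) as HQ.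
  apply (Rmult_le_reg_r d); [lra|].
  replace (2 * V / d * d) with (2 * V) by (field; lra).
  apply Rle_trans with (Rabs (ueval n (udiv n a (x 0%nat)) (x (S i))) * (x (S i) - x 0%nat)).
  - apply Rmult_le_compat_l; [apply Rabs_pos|lra].
  - rewrite <- (Rabs_right (x (S i) - x 0%nat)) by lra.
    rewrite <- Rabs_mult, Rmult_comm, <- HQ.
    pose proof (Rabs_triang (ueval (S n) a (x (S i))) (- ueval (S n) a (x 0%nat))).
    rewrite Rabs_Ropp in *. pose proof (HV (S i) ltac:(lia)). pose proof (HV 0%nat ltac:(lia)).
    unfold Rminus. lra.
Qed.

Lemma ucoef_bound N G d : 0 <= G -> 0 < d -> exists L, 0 <= L /\
  forall n, (n <= N)%nat ->
  forall (a x : nat -> R) V, (forall i, (i <= n)%nat -> Rabs (x i) <= G) ->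
  (forall i, (i < n)%nat -> x i + d <= x (S i)) ->
  (forall i, (i <= n)%nat -> Rabs (ueval n a (x i)) <= V) ->
  forall p, (p <= n)%nat -> Rabs (a p) <= L * V.
Proof.
  intros HG Hd. induction N as [|N [L [HL IH]]].
  - exists 1. split; [lra|]. intros n Hn a x V _ _ HV p Hp.
    replace n with 0%nat in * by lia. replace p with 0%nat by lia.
    specialize (HV 0%nat (le_n 0)). unfold ueval in HV; simpl in HV.
    rewrite Rmult_1_r in HV. lra.
  - set (L' := (1 + G) * (L * (2 / d)) + 1).
    assert (HL' : 0 <= L') by (unfold L'; pose proof (Rmult_le_pos L (2 / d) HL
      ltac:(apply Rlt_le, Rdiv_lt_0_compat; lra)); nra).
    exists (L + L'). split; [lra|].
    intros n Hn a x V Hb Hgap HV p Hp.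
    assert (HV0 : 0 <= V) by (eapply Rle_trans; [apply Rabs_pos|apply (HV 0%nat); lia]).
    destruct (Nat.eq_dec n (S N)) as [->|Hne].
    2:{ eapply Rle_trans; [apply (IH n ltac:(lia) a x V Hb Hgap HV p Hp)|]. nra. }
    assert (Hq : forall p, (p <= N)%nat -> Rabs (udiv N a (x 0%nat) p) <= L * (2 * V / d)).
    { apply (IH N (le_n N) _ (fun i => x (S i))).
      - intros i Hi; apply Hb; lia.
      - intros i Hi; apply Hgap; lia.
      - apply udiv_values_bound; auto. }
    eapply Rle_trans.
    { apply (ucoef_bound_of_udiv N a (x 0%nat) G (L * (2 * V / d)) V); auto.
      - apply Rmult_le_pos; [lra|]. apply Rmult_le_pos; [lra|]. apply Rlt_le, Rinv_0_lt_compat; lra.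
      - apply Hb; lia.
      - apply HV; lia. }
    replace ((1 + G) * (L * (2 * V / d)) + V) with (L' * V) by (unfold L'; field; lra). nra.
Qed.

(** * Gauss--Legendre nodes *)

Definition ushift (Q : nat -> R) (p : nat) : R := match p with O => 0 | S p' => Q p' end.

Lemma ueval_ushift n Q x : ueval (S n) (ushift Q) x = x * ueval n Q x.
Proof. rewrite ueval_S. simpl (ushift Q 0). rewrite Rplus_0_l. reflexivity. Qed.

Lemma ueval_lincomb n (f g : nat -> R) al be de x : de <> 0 ->
  ueval n (fun p => (al * f p - be * g p) / de) x = (al * ueval n f x - be * ueval n g x) / de.
Proof.
  intros Hde. unfold ueval. induction n as [|n IH]; simpl; [field; auto|].
  rewrite IH. field; auto.
Qed.

Lemma legendre_pair_ueval m : exists P Q : nat -> R,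
  (forall i, (m < i)%nat -> P i = 0) /\ (forall i, (S m < i)%nat -> Q i = 0) /\
  forall x, legendre_pair m x = (ueval m P x, ueval (S m) Q x).
Proof.
  induction m as [|m [P [Q [HP [HQ IH]]]]].
  - exists (fun p => match p with O => 1 | _ => 0 end),
      (fun p => match p with 1%nat => 1 | _ => 0 end).
    repeat split.
    + intros [|i] Hi; [lia|reflexivity].
    + intros [|[|i]] Hi; [lia|lia|reflexivity].
    + intros x. unfold ueval; simpl. f_equal; ring.
  - assert (Hm : INR m + 2 <> 0) by (pose proof (pos_INR m); lra).
    exists Q, (fun p => ((2 * INR m + 3) * ushift Q p - (INR m + 1) * P p) / (INR m + 2)).
    repeat split; auto.
    + intros [|i] Hi; [lia|]. simpl. rewrite HQ, HP by lia. field; auto.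
    + intros x. simpl. rewrite IH. f_equal.
      rewrite ueval_lincomb, ueval_ushift, (ueval_ext_deg m (S (S m)) P) by (auto; lia).
      f_equal; ring.
Qed.

Lemma legendre_ueval n : exists c, forall x, legendre n x = ueval n c x.
Proof.
  destruct (legendre_pair_ueval n) as [P [Q [_ [_ H]]]].
  exists P. intros x. unfold legendre. rewrite H. reflexivity.
Qed.

Lemma legendre_at_1 n : legendre n 1 = 1.
Proof.
  assert (H : legendre_pair n 1 = (1, 1)).
  { induction n as [|n IH]; [reflexivity|]. simpl. rewrite IH. f_equal.
    field. pose proof (pos_INR n); lra. }
  unfold legendre. rewrite H. reflexivity.
Qed.

(* [P_(l+1)] is a nonzero polynomial of degree [l+1], so the [l+1] nodes exhaust its roots. *)
Lemma GL_nodes_all_roots l g0 x : GL_nodes l g0 -> legendre (S l) x = 0 ->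
  exists j, (j <= l)%nat /\ x = g0 j.
Proof.
  intros [Hr Hinc] Hx. apply NNPP. intros Hn.
  destruct (legendre_ueval (S l)) as [c Hc].
  set (y := fun i => match i with O => x | S i' => g0 i' end).
  assert (Hz : forall p, (p <= S l)%nat -> c p = 0).
  { apply (ucoef_zero_of_roots (S l) c y).
    - intros [|i] [|j] Hi Hj Hij; simpl; try lia.
      + intros E. apply Hn. exists j. split; [lia|auto].
      + intros E. apply Hn. exists i. split; [lia|auto].
      + destruct (Nat.lt_total i j) as [H|[H|H]]; [|lia|].
        * pose proof (Hinc i j ltac:(lia)); lra.
        * pose proof (Hinc j i ltac:(lia)); lra.
    - intros [|i] Hi; simpl; rewrite <- Hc; auto. apply Hr; lia. }
  pose proof (legendre_at_1 (S l)) as H1. rewrite Hc in H1.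
  unfold ueval in H1. rewrite sum_f_R0_eq_0 in H1; [lra|].
  intros i Hi. rewrite Hz by lia. ring.
Qed.

Fixpoint min_gap (g0 : nat -> R) (n : nat) : R :=
  match n with O => 1 | S n => Rmin (min_gap g0 n) (g0 (S n) - g0 n) end.

Lemma min_gap_pos g0 n : (forall i, (i < n)%nat -> g0 i < g0 (S i)) -> 0 < min_gap g0 n.
Proof.
  induction n as [|n IH]; intros H; simpl; [lra|].
  apply Rmin_glb_lt; [apply IH; intros; apply H; lia|]. pose proof (H n ltac:(lia)); lra.
Qed.

Lemma min_gap_le g0 n : forall i, (i < n)%nat -> g0 i + min_gap g0 n <= g0 (S i).
Proof.
  induction n as [|n IH]; intros i Hi; [lia|]. simpl.
  destruct (Nat.eq_dec i n) as [->|Hne].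
  - pose proof (Rmin_r (min_gap g0 n) (g0 (S n) - g0 n)); lra.
  - pose proof (IH i ltac:(lia)). pose proof (Rmin_l (min_gap g0 n) (g0 (S n) - g0 n)); lra.
Qed.

Definition GL_bounded_separated (l : nat) (G d : R) : Prop := forall g, GL_nodes l g ->
  (forall i, (i <= l)%nat -> Rabs (g i) <= G) /\ (forall i, (i < l)%nat -> g i + d <= g (S i)).

Lemma GL_nodes_uniform l : exists G d, 0 <= G /\ 0 < d /\ GL_bounded_separated l G d.
Proof.
  destruct (classic (exists g0, GL_nodes l g0)) as [[g0 H0]|Hn].
  2:{ exists 0, 1. split; [lra|]. split; [lra|]. intros g Hg. exfalso. eauto. }
  assert (Hinc : forall i, (i < l)%nat -> g0 i < g0 (S i)) by (intros; apply (proj2 H0); lia).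
  exists (sum_f_R0 (fun i => Rabs (g0 i)) l), (min_gap g0 l).
  split; [apply cond_pos_sum; intros; apply Rabs_pos|].
  split; [apply min_gap_pos; auto|].
  intros g Hg. split.
  - intros i Hi. destruct (GL_nodes_all_roots l g0 (g i) H0 (proj1 Hg i Hi)) as [j [Hj ->]].
    apply (sum_f_R0_ge_term (fun i => Rabs (g0 i))); auto using Rabs_pos.
  - intros i Hi.
    destruct (GL_nodes_all_roots l g0 (g i) H0 (proj1 Hg i ltac:(lia))) as [p [Hp Ep]].
    destruct (GL_nodes_all_roots l g0 (g (S i)) H0 (proj1 Hg (S i) ltac:(lia))) as [q [Hq Eq]].
    pose proof (proj2 Hg i (S i) ltac:(lia)) as Hlt. rewrite Ep, Eq in *.
    destruct (Nat.lt_total p q) as [H|[H|H]].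
    + apply (separated_nodes g0 l); auto using min_gap_pos, min_gap_le.
    + subst; lra.
    + pose proof (proj2 H0 q p ltac:(lia)). lra.
Qed.

Lemma GL_nodes_uniform_upto k : exists G d, 0 <= G /\ 0 < d /\
  forall l, (l <= k)%nat -> GL_bounded_separated l G d.
Proof.
  induction k as [|k [G [d [HG [Hd IH]]]]].
  - destruct (GL_nodes_uniform 0) as [G [d [HG [Hd H]]]]. exists G, d.
    split; [auto|split; [auto|]]. intros l' Hl. replace l' with 0%nat by lia. exact H.
  - destruct (GL_nodes_uniform (S k)) as [G' [d' [HG' [Hd' H]]]].
    exists (Rmax G G'), (Rmin d d').
    split; [eapply Rle_trans; [exact HG|apply Rmax_l]|].
    split; [apply Rmin_glb_lt; auto|].
    intros l Hl g Hg.
    pose proof (Rmax_l G G'). pose proof (Rmax_r G G').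
    pose proof (Rmin_l d d'). pose proof (Rmin_r d d').
    destruct (Nat.eq_dec l (S k)) as [->|Hne];
      [destruct (H g Hg) as [A B]|destruct (IH l ltac:(lia) g Hg) as [A B]];
      split; intros i Hi; [pose proof (A i Hi)|pose proof (B i Hi)|pose proof (A i Hi)|pose proof (B i Hi)];
      lra.
Qed.

Lemma Rabs_le_between x h : Rabs x <= h -> - h <= x <= h.
Proof. intros H. pose proof (Rle_abs x). pose proof (Rle_abs (- x)). rewrite Rabs_Ropp in *. lra. Qed.

Section Barycentric.
Variables A B C : pt.

Definition bary2 (p : pt) := cross (psub p A) (psub C A) / cross (psub B A) (psub C A).
Definition bary3 (p : pt) := cross (psub B A) (psub p A) / cross (psub B A) (psub C A).
Definition bary1 (p : pt) := 1 - bary2 p - bary3 p.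

Hypothesis HD : nondegenerate A B C.

Lemma bary_repr p : p = padd (pscale (bary1 p) A) (padd (pscale (bary2 p) B) (pscale (bary3 p) C)).
Proof.
  unfold nondegenerate in HD. unfold bary1, bary2, bary3, cross, psub, padd, pscale in *.
  destruct p as [p1 p2], A as [a1 a2], B as [b1 b2], C as [c1 c2]; simpl in *.
  f_equal; field; auto.
Qed.

Lemma in_tri_bary p : in_tri A B C p -> 0 <= bary1 p /\ 0 <= bary2 p /\ 0 <= bary3 p.
Proof.
  intros [l1 [l2 [l3 [H1 [H2 [H3 [H4 ->]]]]]]].
  unfold nondegenerate in HD. unfold bary1, bary2, bary3, cross, psub, padd, pscale in *.
  destruct A as [a1 a2], B as [b1 b2], C as [c1 c2]; simpl in *.
  replace l1 with (1 - l2 - l3) by lra.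
  match goal with |- 0 <= 1 - ?x - ?y /\ 0 <= ?x /\ 0 <= ?y =>
    replace x with l2 by (field; auto); replace y with l3 by (field; auto) end.
  lra.
Qed.

Lemma bary_in_tri p : 0 <= bary1 p -> 0 <= bary2 p -> 0 <= bary3 p -> in_tri A B C p.
Proof.
  intros H1 H2 H3. exists (bary1 p), (bary2 p), (bary3 p). repeat split; auto.
  - unfold bary1; ring.
  - apply bary_repr.
Qed.

Lemma bary_on_bdry p : 0 <= bary1 p -> 0 <= bary2 p -> 0 <= bary3 p ->
  (bary1 p = 0 \/ bary2 p = 0 \/ bary3 p = 0) -> on_bdry A B C p.
Proof.
  intros H1 H2 H3 H. pose proof (bary_repr p) as Hp.
  assert (Hs : bary1 p + bary2 p + bary3 p = 1) by (unfold bary1; ring).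
  destruct H as [H|[H|H]]; [right; left; exists (bary3 p)|right; right; exists (bary1 p)|
    left; exists (bary2 p)]; (split; [lra|]); rewrite Hp at 1;
    unfold padd, pscale, psub; simpl; rewrite H; f_equal; nra.
Qed.

End Barycentric.

Lemma on_bdry_in_tri A B C x : on_bdry A B C x -> in_tri A B C x.
Proof.
  intros [H|[H|H]]; destruct H as [t [Ht ->]];
    [exists (1 - t), t, 0|exists 0, (1 - t), t|exists t, 0, (1 - t)];
    repeat split; try lra; unfold padd, pscale, psub; simpl; f_equal; ring.
Qed.

Lemma coord_le_pdist p q : Rabs (fst p - fst q) <= pdist p q /\ Rabs (snd p - snd q) <= pdist p q.
Proof.
  unfold pdist, pnorm, pdot, psub; simpl.
  pose proof (Rle_0_sqr (fst p - fst q)). pose proof (Rle_0_sqr (snd p - snd q)).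
  unfold Rsqr in *. split; rewrite <- sqrt_Rsqr_abs; apply sqrt_le_1_alt; unfold Rsqr; lra.
Qed.

Lemma pdist_sym p q : pdist p q = pdist q p.
Proof. unfold pdist, pnorm, pdot, psub; simpl. f_equal. ring. Qed.

Lemma diamT_nonneg A B C : 0 <= diamT A B C.
Proof. eapply Rle_trans; [apply sqrt_pos|apply Rmax_l]. Qed.

Lemma vertex_dist_le_diamT A B C P Q : (P = A \/ P = B \/ P = C) -> (Q = A \/ Q = B \/ Q = C) ->
  pdist P Q <= diamT A B C.
Proof.
  assert (H1 : pdist A B <= diamT A B C) by apply Rmax_l.
  assert (H2 : pdist B C <= diamT A B C)
    by (unfold diamT; eapply Rle_trans; [apply Rmax_l|apply Rmax_r]).
  assert (H3 : pdist C A <= diamT A B C)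
    by (unfold diamT; eapply Rle_trans; [apply Rmax_r|apply Rmax_r]).
  assert (H0 : forall X, pdist X X <= diamT A B C).
  { intros X. unfold pdist, pnorm, pdot, psub; simpl. replace (_ + _) with 0 by ring.
    rewrite sqrt_0. apply diamT_nonneg. }
  intros [-> | [-> | ->]] [-> | [-> | ->]]; auto; rewrite pdist_sym; auto.
Qed.

Lemma convex_comb_dist (u1 u2 u3 l1 l2 l3 w h : R) :
  0 <= l1 -> 0 <= l2 -> 0 <= l3 -> l1 + l2 + l3 = 1 ->
  Rabs (u1 - w) <= h -> Rabs (u2 - w) <= h -> Rabs (u3 - w) <= h ->
  Rabs (l1 * u1 + l2 * u2 + l3 * u3 - w) <= h.
Proof.
  intros L1 L2 L3 Hl H1 H2 H3. apply Rabs_le_between in H1, H2, H3.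
  replace (l1 * u1 + l2 * u2 + l3 * u3 - w) with (l1 * (u1 - w) + l2 * (u2 - w) + l3 * (u3 - w))
    by (replace l1 with (1 - l2 - l3) by lra; ring).
  apply Rabs_le. split; nra.
Qed.

Lemma in_tri_coord_diff A B C (f : pt -> R) p q : f = fst \/ f = snd ->
  in_tri A B C p -> in_tri A B C q -> Rabs (f p - f q) <= diamT A B C.
Proof.
  intros Hf Hp Hq.
  assert (Hcomb : forall x, in_tri A B C x -> exists l1 l2 l3, 0 <= l1 /\ 0 <= l2 /\ 0 <= l3 /\
     l1 + l2 + l3 = 1 /\ f x = l1 * f A + l2 * f B + l3 * f C).
  { intros x [l1 [l2 [l3 [H1 [H2 [H3 [H4 ->]]]]]]]. exists l1, l2, l3. repeat split; auto.
    destruct Hf as [->| ->]; simpl; ring. }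
  assert (Hv : forall P Q, (P = A \/ P = B \/ P = C) -> (Q = A \/ Q = B \/ Q = C) ->
            Rabs (f P - f Q) <= diamT A B C).
  { intros P Q HP HQ. pose proof (vertex_dist_le_diamT A B C P Q HP HQ).
    destruct (coord_le_pdist P Q). destruct Hf as [->| ->]; lra. }
  assert (HVq : forall P, (P = A \/ P = B \/ P = C) -> Rabs (f P - f q) <= diamT A B C).
  { intros P HP. destruct (Hcomb q Hq) as [l1 [l2 [l3 [H1 [H2 [H3 [H4 ->]]]]]]].
    rewrite <- Rabs_Ropp, Ropp_minus_distr.
    apply convex_comb_dist; auto; rewrite <- Rabs_Ropp, Ropp_minus_distr; apply Hv; auto. }
  destruct (Hcomb p Hp) as [l1 [l2 [l3 [H1 [H2 [H3 [H4 ->]]]]]]].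
  apply convex_comb_dist; auto.
Qed.

(** * Flatness of the curve inside small triangles *)

Lemma Rfrac_decomp s : exists s' z, 0 <= s' < 1 /\ s = s' + IZR z.
Proof.
  exists (s - IZR (Int_part s)), (Int_part s). pose proof (base_Int_part s). split; [lra|ring].
Qed.

Section Periodic.
Variables g1 g2 : R -> R.
Hypothesis Hper : forall s, g1 (s + 1) = g1 s /\ g2 (s + 1) = g2 s.
Hypothesis Hinj : forall s t, 0 <= s < 1 -> 0 <= t < 1 -> g1 s = g1 t -> g2 s = g2 t -> s = t.

Lemma curve_periodic_nat n s : g1 (s + INR n) = g1 s /\ g2 (s + INR n) = g2 s.
Proof.
  induction n as [|n IH]; [simpl; rewrite Rplus_0_r; auto|].
  rewrite S_INR, <- Rplus_assoc. destruct (Hper (s + INR n)) as [-> ->]. exact IH.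
Qed.

Lemma curve_periodic_Z z s : g1 (s + IZR z) = g1 s /\ g2 (s + IZR z) = g2 s.
Proof.
  destruct z as [|p|p].
  - rewrite Rplus_0_r; auto.
  - rewrite <- positive_nat_Z, <- INR_IZR_INZ. apply curve_periodic_nat.
  - rewrite <- Pos2Z.opp_pos, opp_IZR, <- positive_nat_Z, <- INR_IZR_INZ.
    pose proof (curve_periodic_nat (Pos.to_nat p) (s + - INR (Pos.to_nat p))) as H.
    replace (s + - INR (Pos.to_nat p) + INR (Pos.to_nat p)) with s in H by ring.
    destruct H; split; auto.
Qed.

Lemma curve_same_point u v : g1 u = g1 v -> g2 u = g2 v -> exists z, u = v + IZR z.
Proof.
  intros H1 H2.
  destruct (Rfrac_decomp u) as [u' [zu [Hu ->]]]. destruct (Rfrac_decomp v) as [v' [zv [Hv ->]]].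
  destruct (curve_periodic_Z zu u') as [A1 A2]. destruct (curve_periodic_Z zv v') as [B1 B2].
  rewrite A1, B1 in H1. rewrite A2, B2 in H2.
  pose proof (Hinj u' v' Hu Hv H1 H2). subst. exists (zu - zv)%Z. rewrite minus_IZR. ring.
Qed.

Lemma curve_no_short_loop u v : 0 < u - v < 1 -> g1 u = g1 v -> g2 u = g2 v -> False.
Proof.
  intros H H1 H2. destruct (curve_same_point u v H1 H2) as [z ->].
  assert (Hz : 0 < IZR z < 1) by lra. destruct Hz as [A B].
  apply lt_IZR in A. apply lt_IZR in B. lia.
Qed.

Lemma curve_param_window s a : exists s', a <= s' < a + 1 /\ g1 s' = g1 s /\ g2 s' = g2 s.
Proof.
  destruct (Rfrac_decomp (s - a)) as [f [z [Hf Hz]]]. exists (a + f). split; [lra|].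
  replace s with (a + f + IZR z) by lra. destruct (curve_periodic_Z z (a + f)). split; auto.
Qed.

End Periodic.

Definition bary_min A B C p := Rmin (bary1 A B C p) (Rmin (bary2 A B C p) (bary3 A B C p)).

Lemma bary_min_in_tri A B C p : nondegenerate A B C -> 0 <= bary_min A B C p -> in_tri A B C p.
Proof.
  unfold bary_min, Rmin. intros HD H.
  apply (bary_in_tri A B C HD); repeat destruct Rle_dec; lra.
Qed.

Lemma bary_min_interior A B C p : nondegenerate A B C ->
  in_tri A B C p -> ~ on_bdry A B C p -> 0 < bary_min A B C p.
Proof.
  intros HD Hp Hb. destruct (in_tri_bary A B C HD p Hp) as [L1 [L2 L3]].
  assert (Hnz : bary1 A B C p <> 0 /\ bary2 A B C p <> 0 /\ bary3 A B C p <> 0)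
    by (repeat split; intros E; apply Hb, (bary_on_bdry A B C HD); auto).
  unfold bary_min, Rmin. repeat destruct Rle_dec; lra.
Qed.

Lemma bary_min_zero_on_bdry A B C p : nondegenerate A B C ->
  bary_min A B C p = 0 -> on_bdry A B C p.
Proof.
  unfold bary_min, Rmin. intros HD H.
  apply (bary_on_bdry A B C HD); repeat destruct Rle_dec; lra.
Qed.

Lemma bary_affine A B C (f : pt -> R) :
  f = bary1 A B C \/ f = bary2 A B C \/ f = bary3 A B C ->
  exists al be ga, forall p, f p = al + be * fst p + ga * snd p.
Proof.
  destruct A as [a1 a2], B as [b1 b2], C as [c1 c2].
  intros [Hf|[Hf|Hf]]; subst f; unfold bary1, bary2, bary3, cross, psub; simpl;
    set (D := (b1 - a1) * (c2 - a2) - (b2 - a2) * (c1 - a1)).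
  - exists (1 - (- a1 * (c2 - a2) + a2 * (c1 - a1)) / D - (- (b1 - a1) * a2 + (b2 - a2) * a1) / D),
      (- (c2 - a2) / D + (b2 - a2) / D), ((c1 - a1) / D - (b1 - a1) / D).
    intros p. unfold Rdiv. ring.
  - exists ((- a1 * (c2 - a2) + a2 * (c1 - a1)) / D), ((c2 - a2) / D), (- (c1 - a1) / D).
    intros p. unfold Rdiv. ring.
  - exists ((- (b1 - a1) * a2 + (b2 - a2) * a1) / D), (- (b2 - a2) / D), ((b1 - a1) / D).
    intros p. unfold Rdiv. ring.
Qed.

Lemma continuity_Rmin (f g : R -> R) : continuity f -> continuity g ->
  continuity (fun u => Rmin (f u) (g u)).
Proof.
  intros Hf Hg.
  replace (fun u => Rmin (f u) (g u)) with (mult_real_fct (/2) ((f + g) - comp Rabs (f - g))%F).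
  - apply continuity_scal, continuity_minus; [apply continuity_plus; auto|].
    apply continuity_comp; [apply continuity_minus; auto|apply Rcontinuity_abs].
  - apply functional_extensionality; intro u.
    unfold mult_real_fct, plus_fct, minus_fct, comp, Rmin.
    destruct (Rle_dec (f u) (g u)); [rewrite Rabs_left1 by lra|rewrite Rabs_right by lra]; field.
Qed.

Lemma continuity_bary_min_curve A B C g1 g2 : continuity g1 -> continuity g2 ->
  continuity (fun u => bary_min A B C (g1 u, g2 u)).
Proof.
  intros H1 H2.
  assert (Hb : forall f, f = bary1 A B C \/ f = bary2 A B C \/ f = bary3 A B C ->
    continuity (fun u => f (g1 u, g2 u))).
  { intros f Hf. destruct (bary_affine A B C f Hf) as [al [be [ga Hab]]].
    replace (fun u => f (g1 u, g2 u)) with (fun u => al + be * g1 u + ga * g2 u)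
      by (apply functional_extensionality; intro u; rewrite Hab; reflexivity).
    apply continuity_plus; [apply continuity_plus; [apply continuity_const; intros ? ?; auto|]|];
      apply continuity_scal; auto. }
  unfold bary_min. apply continuity_Rmin; [|apply continuity_Rmin]; apply Hb; auto.
Qed.

Lemma sq_le_of_Rabs_le x h : Rabs x <= h -> x * x <= h * h.
Proof. intros H. apply Rabs_le_between in H. nra. Qed.

Lemma dot_bound a1 a2 b1 b2 A B : Rabs a1 <= A -> Rabs a2 <= A -> Rabs b1 <= B -> Rabs b2 <= B ->
  Rabs (a1 * b1 + a2 * b2) <= 2 * A * B.
Proof.
  intros H1 H2 H3 H4. eapply Rle_trans; [apply Rabs_triang|]. rewrite !Rabs_mult.
  assert (Rabs a1 * Rabs b1 <= A * B) by (apply Rmult_le_compat; auto using Rabs_pos).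
  assert (Rabs a2 * Rabs b2 <= A * B) by (apply Rmult_le_compat; auto using Rabs_pos).
  lra.
Qed.

(* Rolle puts a zero of [f'] in [(p, q)], so [|f'| <= K (q - p)] on [[p, q]]. *)
Lemma deviation_between_equal_values (f f' f'' : R -> R) lo hi K p c q :
  (forall u, derivable_pt_lim f u (f' u)) -> (forall u, derivable_pt_lim f' u (f'' u)) ->
  (forall u, lo <= u <= hi -> Rabs (f'' u) <= K) ->
  lo <= p -> p < q -> q <= hi -> p <= c <= q -> f p = f q ->
  Rabs (f c - f p) <= K * (q - p) ^ 2.
Proof.
  intros Hd Hdd HK Hp Hpq Hq Hc Hfpq.
  destruct (MVT_cor2 f f' p q Hpq (fun u _ => Hd u)) as [xi [Hxi Hxi']].
  assert (Hxi0 : f' xi = 0) by (apply (Rmult_eq_reg_r (q - p)); lra).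
  assert (Hf' : forall u, p <= u <= q -> Rabs (f' u) <= K * (q - p)).
  { intros u Hu.
    pose proof (mvt_lipschitz f' f'' lo hi K (fun u _ => Hdd u) HK u xi ltac:(lra) ltac:(lra)) as H.
    rewrite Hxi0, Rminus_0_r in H. eapply Rle_trans; [exact H|].
    pose proof (HK lo ltac:(lra)). pose proof (Rabs_pos (f'' lo)).
    apply Rmult_le_compat_l; [lra|]. apply Rabs_le. lra. }
  pose proof (mvt_lipschitz f f' p q (K * (q - p)) (fun u _ => Hd u) Hf' c p ltac:(lra) ltac:(lra)) as H.
  rewrite (Rabs_right (c - p)) in H by lra. eapply Rle_trans; [exact H|].
  pose proof (Hf' p ltac:(lra)). pose proof (Rabs_pos (f' p)).
  replace (K * (q - p) ^ 2) with (K * (q - p) * (q - p)) by ring.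
  apply Rmult_le_compat_l; lra.
Qed.

Section RegularCurve.
Variables g1 g2 g1' g2' g1'' g2'' : R -> R.
Hypothesis Hd1 : forall x, derivable_pt_lim g1 x (g1' x).
Hypothesis Hd2 : forall x, derivable_pt_lim g2 x (g2' x).
Hypothesis Hdd1 : forall x, derivable_pt_lim g1' x (g1'' x).
Hypothesis Hdd2 : forall x, derivable_pt_lim g2' x (g2'' x).
Variables M1 K m0 : R.
Hypothesis HM1 : forall u, 0 <= u <= 3 -> Rabs (g1' u) <= M1 /\ Rabs (g2' u) <= M1.
Hypothesis HK : forall u, 0 <= u <= 3 -> Rabs (g1'' u) <= K /\ Rabs (g2'' u) <= K.
Hypothesis Hm0 : 0 < m0.
Hypothesis Hm0' : forall u, 0 <= u <= 3 -> m0 <= g1' u * g1' u + g2' u * g2' u.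

Lemma curve_normal_deviation (eta : pt) p c q :
  Rabs (fst eta) <= 1 -> Rabs (snd eta) <= 1 -> 0 <= p -> p < q -> q <= 3 -> p <= c <= q ->
  pdot eta (psub (g1 q, g2 q) (g1 p, g2 p)) = 0 ->
  Rabs (pdot eta (psub (g1 c, g2 c) (g1 p, g2 p))) <= 2 * K * (q - p) ^ 2.
Proof.
  intros He1 He2 Hp Hpq Hq Hc Hez. unfold pdot, psub in *; simpl in *.
  set (phi := fun u => 0 + fst eta * g1 u + snd eta * g2 u).
  replace (fst eta * (g1 c - g1 p) + snd eta * (g2 c - g2 p)) with (phi c - phi p)
    by (unfold phi; ring).
  replace (2 * K) with (2 * 1 * K) by ring.
  apply (deviation_between_equal_values phi (fun u => 0 + fst eta * g1' u + snd eta * g2' u)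
    (fun u => fst eta * g1'' u + snd eta * g2'' u) 0 3); auto.
  - intros u. eapply derivable_pt_lim_eq; [apply derivable_pt_lim_affine; auto|ring].
  - intros u. apply derivable_pt_lim_affine; auto.
  - intros u Hu. destruct (HK u Hu). apply dot_bound; auto.
  - unfold phi. lra.
Qed.

(* Along a short parameter interval the tangent barely turns, so the projection on the
   initial tangent [g'(p)] grows at rate at least [m0 / 2]. *)
Lemma curve_param_le_chord eps p q : 2 * M1 * K * eps <= m0 / 2 ->
  0 <= p -> p < q -> q <= 3 -> q - p <= eps ->
  q - p <= 4 * M1 / m0 * pdist (g1 p, g2 p) (g1 q, g2 q).
Proof.
  intros Heps Hp Hpq Hq Hqp.
  set (w1 := g1' p). set (w2 := g2' p).
  set (psi := fun u => 0 + w1 * g1 u + w2 * g2 u).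
  set (psi' := fun u => 0 + w1 * g1' u + w2 * g2' u).
  assert (Dpsi : forall x, derivable_pt_lim psi x (psi' x)).
  { intros x. unfold psi, psi'. eapply derivable_pt_lim_eq; [apply derivable_pt_lim_affine; auto|ring]. }
  assert (Hw : Rabs w1 <= M1 /\ Rabs w2 <= M1) by (apply HM1; lra).
  assert (HK0 : 0 <= K) by (destruct (HK 0 ltac:(lra)); pose proof (Rabs_pos (g1'' 0)); lra).
  assert (Bpsi' : forall u, p <= u <= q -> m0 / 2 <= psi' u).
  { intros u Hu.
    assert (Hl : forall (h h' : R -> R), (forall x, derivable_pt_lim h x (h' x)) ->
              (forall u, 0 <= u <= 3 -> Rabs (h' u) <= K) -> Rabs (h u - h p) <= K * eps).
    { intros h h' Hh Hh'. eapply Rle_trans.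
      - apply (mvt_lipschitz h h' 0 3 K (fun u _ => Hh u) Hh'); lra.
      - rewrite Rabs_right by lra. apply Rmult_le_compat_l; lra. }
    pose proof (dot_bound w1 w2 (g1' u - w1) (g2' u - w2) M1 (K * eps) (proj1 Hw) (proj2 Hw)
      (Hl _ _ Hdd1 (fun u Hu => proj1 (HK u Hu))) (Hl _ _ Hdd2 (fun u Hu => proj2 (HK u Hu)))) as Hdb.
    pose proof (Hm0' p ltac:(lra)) as Hm. fold w1 w2 in Hm.
    apply Rabs_le_between in Hdb. unfold psi'.
    replace (0 + w1 * g1' u + w2 * g2' u) with
      ((w1 * w1 + w2 * w2) + (w1 * (g1' u - w1) + w2 * (g2' u - w2))) by ring.
    lra. }
  destruct (MVT_cor2 psi psi' p q Hpq (fun c _ => Dpsi c)) as [xi [Hxi Hxi']].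
  assert (Hpsi1 : m0 / 2 * (q - p) <= psi q - psi p).
  { rewrite Hxi. apply Rmult_le_compat_r; [lra|]. apply Bpsi'; lra. }
  assert (Hpsi2 : Rabs (psi q - psi p) <= 2 * M1 * pdist (g1 p, g2 p) (g1 q, g2 q)).
  { unfold psi. replace (0 + w1 * g1 q + w2 * g2 q - (0 + w1 * g1 p + w2 * g2 p)) with
      (w1 * (g1 q - g1 p) + w2 * (g2 q - g2 p)) by ring.
    rewrite pdist_sym. destruct (coord_le_pdist (g1 q, g2 q) (g1 p, g2 p)) as [Cq1 Cq2].
    apply dot_bound; tauto. }
  pose proof (Rle_abs (psi q - psi p)).
  apply (Rmult_le_reg_l (m0 / 2)); [lra|].
  replace (m0 / 2 * (4 * M1 / m0 * pdist (g1 p, g2 p) (g1 q, g2 q))) with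
    (2 * M1 * pdist (g1 p, g2 p) (g1 q, g2 q)) by (field; lra).
  lra.
Qed.

End RegularCurve.

Section Arc.
Variables g1 g2 : R -> R.
Hypothesis Hper : forall s, g1 (s + 1) = g1 s /\ g2 (s + 1) = g2 s.
Hypothesis Hinj : forall s t, 0 <= s < 1 -> 0 <= t < 1 -> g1 s = g1 t -> g2 s = g2 t -> s = t.
Hypothesis Hc1 : continuity g1.
Hypothesis Hc2 : continuity g2.

Definition arc_ends (y z : pt) (p q : R) : Prop :=
  ((g1 p, g2 p) = y /\ (g1 q, g2 q) = z) \/ ((g1 p, g2 p) = z /\ (g1 q, g2 q) = y).

(* The arc cannot leave [T] without crossing [dT] at a third point, which injectivity on
   a period excludes. *)
Lemma curve_arc_in_tri A B C y z p c q : nondegenerate A B C ->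
  on_bdry A B C y -> on_bdry A B C z ->
  (forall x, on_curve g1 g2 x -> on_bdry A B C x -> x = y \/ x = z) ->
  p < c < q -> q <= p + 1 -> arc_ends y z p q ->
  in_tri A B C (g1 c, g2 c) -> ~ on_bdry A B C (g1 c, g2 c) ->
  forall u, p <= u <= q -> in_tri A B C (g1 u, g2 u).
Proof.
  intros HD Hy Hz Hbd Hpcq Hqp Hends Hc Hcb.
  set (phi := fun u => bary_min A B C (g1 u, g2 u)).
  assert (Hcont : continuity phi) by (apply continuity_bary_min_curve; auto).
  assert (Hphic : 0 < phi c) by (apply bary_min_interior; auto).
  assert (Hnz : forall w, p < w < q -> phi w <> 0).
  { intros w Hw E. apply bary_min_zero_on_bdry in E; auto.
    destruct (Hbd _ (ex_intro _ w eq_refl) E) as [Ew|Ew]; destruct Hends as [[Ep Eq]|[Ep Eq]];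
      rewrite <- ?Ep, <- ?Eq in Ew; injection Ew as Ew1 Ew2;
      [apply (curve_no_short_loop g1 g2 Hper Hinj w p)|apply (curve_no_short_loop g1 g2 Hper Hinj q w)|
       apply (curve_no_short_loop g1 g2 Hper Hinj q w)|apply (curve_no_short_loop g1 g2 Hper Hinj w p)];
      auto; lra. }
  intros u Hu.
  destruct (Req_dec u p) as [->|Hup];
    [destruct Hends as [[-> _]|[-> _]]; apply on_bdry_in_tri; auto|].
  destruct (Req_dec u q) as [->|Huq];
    [destruct Hends as [[_ ->]|[_ ->]]; apply on_bdry_in_tri; auto|].
  apply bary_min_in_tri; auto. fold (phi u).
  destruct (Rle_or_lt 0 (phi u)) as [?|Hneg]; auto. exfalso.
  destruct (Rtotal_order u c) as [Huc|[->|Huc]]; [|lra|].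
  - destruct (IVT phi u c Hcont Huc Hneg Hphic) as [w [Hw Ew]].
    apply (Hnz w); auto. destruct (Req_dec w u) as [->|]; lra.
  - destruct (IVT (fun x => - phi x) c u (continuity_opp _ Hcont) Huc ltac:(lra) ltac:(lra))
      as [w [Hw Ew]].
    apply (Hnz w); [|lra]. destruct (Req_dec w u) as [->|]; lra.
Qed.

Variables eps d0 h0 : R.
Hypothesis Heps : 0 < eps <= 1/2.
Hypothesis Hd0 : forall u, 0 <= u <= 2 ->
  d0 <= (g1 (u + eps) - g1 u) * (g1 (u + eps) - g1 u) + (g2 (u + eps) - g2 u) * (g2 (u + eps) - g2 u).
Hypothesis Hh0d0 : 2 * h0 * h0 < d0.

Lemma curve_arc_short A B C p q : diamT A B C <= h0 -> 0 <= p -> q < 2 ->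
  (forall u, p <= u <= q -> in_tri A B C (g1 u, g2 u)) -> q - p < eps.
Proof.
  intros Hh Hp Hq Hin.
  destruct (Rlt_or_le (q - p) eps) as [?|Hge]; auto. exfalso.
  pose proof (in_tri_coord_diff A B C fst _ _ (or_introl eq_refl)
    (Hin (p + eps) ltac:(lra)) (Hin p ltac:(lra))) as T1.
  pose proof (in_tri_coord_diff A B C snd _ _ (or_intror eq_refl)
    (Hin (p + eps) ltac:(lra)) (Hin p ltac:(lra))) as T2.
  simpl in T1, T2. pose proof (Hd0 p ltac:(lra)).
  pose proof (sq_le_of_Rabs_le _ _ T1). pose proof (sq_le_of_Rabs_le _ _ T2).
  pose proof (diamT_nonneg A B C).
  assert (diamT A B C * diamT A B C <= h0 * h0) by (apply Rmult_le_compat; lra).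
  lra.
Qed.

Variables g1' g2' g1'' g2'' : R -> R.
Hypothesis Hd1 : forall x, derivable_pt_lim g1 x (g1' x).
Hypothesis Hd2 : forall x, derivable_pt_lim g2 x (g2' x).
Hypothesis Hdd1 : forall x, derivable_pt_lim g1' x (g1'' x).
Hypothesis Hdd2 : forall x, derivable_pt_lim g2' x (g2'' x).
Variables M1 K m0 : R.
Hypothesis HM1 : forall u, 0 <= u <= 3 -> Rabs (g1' u) <= M1 /\ Rabs (g2' u) <= M1.
Hypothesis HK : forall u, 0 <= u <= 3 -> Rabs (g1'' u) <= K /\ Rabs (g2'' u) <= K.
Hypothesis Hm0 : 0 < m0.
Hypothesis Hm0' : forall u, 0 <= u <= 3 -> m0 <= g1' u * g1' u + g2' u * g2' u.
Hypothesis HepsK : 2 * M1 * K * eps <= m0 / 2.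

Lemma curve_arc_flat A B C y z (eta : pt) p c q : nondegenerate A B C -> diamT A B C <= h0 ->
  on_bdry A B C y -> on_bdry A B C z ->
  (forall x, on_curve g1 g2 x -> on_bdry A B C x -> x = y \/ x = z) ->
  Rabs (fst eta) <= 1 -> Rabs (snd eta) <= 1 -> pdot eta (psub z y) = 0 ->
  0 <= p -> p < c < q -> q <= p + 1 -> q < 2 -> arc_ends y z p q ->
  in_tri A B C (g1 c, g2 c) -> ~ on_bdry A B C (g1 c, g2 c) ->
  Rabs (pdot eta (psub (g1 c, g2 c) y)) <= 2 * K * (4 * M1 / m0) ^ 2 * pdist y z ^ 2.
Proof.
  intros HD Hh Hy Hz Hbd He1 He2 Hez Hp Hpcq Hqp Hq2 Hends Hc Hcb.
  pose proof (curve_arc_in_tri A B C y z p c q HD Hy Hz Hbd Hpcq Hqp Hends Hc Hcb) as Hin.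
  pose proof (curve_arc_short A B C p q Hh Hp Hq2 Hin) as Hshort.
  assert (Hends' : pdot eta (psub (g1 q, g2 q) (g1 p, g2 p)) = 0 /\
    pdot eta (psub (g1 c, g2 c) y) = pdot eta (psub (g1 c, g2 c) (g1 p, g2 p)) /\
    pdist (g1 p, g2 p) (g1 q, g2 q) = pdist y z).
  { unfold pdot, psub in *; simpl in *.
    destruct Hends as [[<- <-]|[<- <-]]; simpl in *; repeat split; (reflexivity || apply pdist_sym || lra). }
  destruct Hends' as [Hpq [-> Hr]].
  eapply Rle_trans;
    [apply (curve_normal_deviation g1 g2 g1' g2' g1'' g2'' Hd1 Hd2 Hdd1 Hdd2 K HK eta p c q);
     auto; lra|].
  pose proof (curve_param_le_chord g1 g2 g1' g2' g1'' g2'' Hd1 Hd2 Hdd1 Hdd2 M1 K m0 HM1 HK Hm0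
    Hm0' eps p q HepsK Hp ltac:(lra) ltac:(lra) ltac:(lra)) as Hchord.
  rewrite Hr in Hchord.
  assert (HK0 : 0 <= K) by (destruct (HK 0 ltac:(lra)); pose proof (Rabs_pos (g1'' 0)); lra).
  replace (2 * K * (4 * M1 / m0) ^ 2 * pdist y z ^ 2) with
    (2 * K * (4 * M1 / m0 * pdist y z) ^ 2) by ring.
  apply Rmult_le_compat_l; [lra|]. apply pow_incr. lra.
Qed.

Definition flat_in_small_triangles (h B : R) : Prop :=
  forall A Bv Cv, nondegenerate A Bv Cv -> diamT A Bv Cv <= h ->
  forall y z, y <> z -> on_curve g1 g2 y -> on_curve g1 g2 z ->
  on_bdry A Bv Cv y -> on_bdry A Bv Cv z ->
  (forall x, on_curve g1 g2 x -> on_bdry A Bv Cv x -> x = y \/ x = z) ->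
  forall eta, Rabs (fst eta) <= 1 -> Rabs (snd eta) <= 1 -> pdot eta (psub z y) = 0 ->
  forall X, on_curve g1 g2 X -> in_tri A Bv Cv X ->
  Rabs (pdot eta (psub X y)) <= B * pdist y z ^ 2.

(* Parametrize [y] by [a] in [[0, 1)] and [z], [X] by [b], [c] in [[a, a + 1)]; then [X]
   lies on the arc [[a, b]] or on the arc [[b, a + 1]]. *)
Lemma curve_flat : flat_in_small_triangles h0 (2 * K * (4 * M1 / m0) ^ 2).
Proof.
  intros A Bv Cv HD Hh y z Hyz [sy Ey] [sz Ez] Hy Hz Hbd eta He1 He2 Hez X [sX EX] HX.
  destruct (curve_param_window g1 g2 Hper sy 0) as [a [Ha [Ea1 Ea2]]].
  destruct (curve_param_window g1 g2 Hper sz a) as [b [Hb [Eb1 Eb2]]].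
  destruct (curve_param_window g1 g2 Hper sX a) as [c [Hc [Ec1 Ec2]]].
  rewrite <- Ea1, <- Ea2 in Ey. rewrite <- Eb1, <- Eb2 in Ez. rewrite <- Ec1, <- Ec2 in EX.
  assert (HK0 : 0 <= K) by (destruct (HK 0 ltac:(lra)); pose proof (Rabs_pos (g1'' 0)); lra).
  assert (Hnn : 0 <= 2 * K * (4 * M1 / m0) ^ 2 * pdist y z ^ 2).
  { apply Rmult_le_pos; [apply Rmult_le_pos; [lra|apply pow2_ge_0]|apply pow2_ge_0]. }
  destruct (classic (on_bdry A Bv Cv X)) as [HXb|HXb].
  { destruct (Hbd X (ex_intro _ c EX) HXb) as [-> | ->].
    - unfold pdot, psub. rewrite !Rminus_diag_eq by reflexivity. simpl.
      rewrite !Rmult_0_r, Rplus_0_r, Rabs_R0. lra.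
    - rewrite Hez, Rabs_R0. lra. }
  assert (Hab : a <> b) by (intros ->; apply Hyz; rewrite Ey, Ez; reflexivity).
  assert (Hca : c <> a) by (intros ->; apply HXb; rewrite EX, <- Ey; auto).
  assert (Hcb : c <> b) by (intros ->; apply HXb; rewrite EX, <- Ez; auto).
  rewrite EX in HX, HXb |- *.
  destruct (Rtotal_order c b) as [Hcb'|[Hcb'|Hcb']]; [|contradiction|].
  - apply (curve_arc_flat A Bv Cv y z eta a c b); auto; try lra.
    left; split; symmetry; assumption.
  - apply (curve_arc_flat A Bv Cv y z eta b c (a + 1)); auto; try lra.
    destruct (Hper a) as [P1 P2]. right; split; [symmetry; assumption|].
    rewrite P1, P2. symmetry; assumption.
Qed.

End Arc.

Lemma continuity_of_derivative (f f' : R -> R) :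
  (forall x, derivable_pt_lim f x (f' x)) -> continuity f.
Proof. intros H x. apply derivable_continuous_pt. exists (f' x). apply H. Qed.

Lemma continuity_bound2 (f g : R -> R) a b : a <= b -> continuity f -> continuity g ->
  exists M, forall u, a <= u <= b -> Rabs (f u) <= M /\ Rabs (g u) <= M.
Proof.
  intros Hab Hf Hg.
  assert (Hc : continuity (fun u => Rabs (f u) + Rabs (g u))).
  { apply (continuity_plus (fun u => Rabs (f u)) (fun u => Rabs (g u)));
      [apply (continuity_comp f Rabs)|apply (continuity_comp g Rabs)]; auto using Rcontinuity_abs. }
  destruct (continuity_ab_maj _ a b Hab (fun c _ => Hc c)) as [x [Hx _]].
  exists (Rabs (f x) + Rabs (g x)). intros u Hu. pose proof (Hx u Hu).
  pose proof (Rabs_pos (f u)). pose proof (Rabs_pos (g u)). split; lra.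
Qed.

Lemma continuity_pos_lower_bound (f : R -> R) a b : a <= b -> continuity f ->
  (forall u, a <= u <= b -> 0 < f u) -> exists m, 0 < m /\ forall u, a <= u <= b -> m <= f u.
Proof.
  intros Hab Hf Hpos. destruct (continuity_ab_min f a b Hab (fun c _ => Hf c)) as [x [Hx Hxab]].
  exists (f x). split; auto.
Qed.

Lemma curve_chord_lower_bound g1 g2 :
  (forall s, g1 (s + 1) = g1 s /\ g2 (s + 1) = g2 s) ->
  (forall s t, 0 <= s < 1 -> 0 <= t < 1 -> g1 s = g1 t -> g2 s = g2 t -> s = t) ->
  continuity g1 -> continuity g2 -> forall eps, 0 < eps < 1 ->
  exists d0, 0 < d0 /\ forall u, 0 <= u <= 2 ->
    d0 <= (g1 (u + eps) - g1 u) * (g1 (u + eps) - g1 u) + (g2 (u + eps) - g2 u) * (g2 (u + eps) - g2 u).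
Proof.
  intros Hper Hinj Hc1 Hc2 eps Heps.
  apply continuity_pos_lower_bound; [lra| |].
  - assert (Hsh : forall g, continuity g -> continuity (fun u => g (u + eps) - g u)).
    { intros g Hg. apply continuity_minus; auto.
      apply (continuity_comp (fun u => u + eps) g); auto.
      apply continuity_plus; [apply derivable_continuous, derivable_id|].
      apply continuity_const; intros ? ?; auto. }
    apply continuity_plus; apply continuity_mult; apply Hsh; auto.
  - intros u _. set (u1 := g1 (u + eps) - g1 u). set (u2 := g2 (u + eps) - g2 u).
    destruct (Rlt_or_le 0 (u1 * u1 + u2 * u2)) as [|Hle]; auto. exfalso.
    pose proof (Rle_0_sqr u1). pose proof (Rle_0_sqr u2). unfold Rsqr in *.
    assert (U1 : u1 = 0) by nra. assert (U2 : u2 = 0) by nra.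
    apply (curve_no_short_loop g1 g2 Hper Hinj (u + eps) u); [lra|unfold u1 in U1|unfold u2 in U2];
      lra.
Qed.

Lemma smooth_closed_curve_flat g1 g2 : smooth_closed_curve g1 g2 ->
  exists h0 B, 0 < h0 /\ h0 <= 1 /\ 0 <= B /\ flat_in_small_triangles g1 g2 h0 B.
Proof.
  intros [[D1 [E1 HD1]] [[D2 [E2 HD2]] [Hper [Hreg Hinj]]]]. subst g1 g2.
  set (g1 := D1 0%nat). set (g2 := D2 0%nat).
  assert (Hcont : forall D : nat -> R -> R, (forall n x, derivable_pt_lim (D n) x (D (S n) x)) ->
            forall n, continuity (D n)) by (intros D HD n; apply (continuity_of_derivative _ _ (HD n))).
  destruct (continuity_bound2 (D1 1%nat) (D2 1%nat) 0 3 ltac:(lra) (Hcont D1 HD1 1%nat)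
    (Hcont D2 HD2 1%nat)) as [M1 HM1].
  destruct (continuity_bound2 (D1 2%nat) (D2 2%nat) 0 3 ltac:(lra) (Hcont D1 HD1 2%nat)
    (Hcont D2 HD2 2%nat)) as [K HK].
  assert (HM0 : 0 <= M1) by (destruct (HM1 0 ltac:(lra)); pose proof (Rabs_pos (D1 1%nat 0)); lra).
  assert (HK0 : 0 <= K) by (destruct (HK 0 ltac:(lra)); pose proof (Rabs_pos (D1 2%nat 0)); lra).
  destruct (continuity_pos_lower_bound (fun u => D1 1%nat u * D1 1%nat u + D2 1%nat u * D2 1%nat u)
    0 3 ltac:(lra)) as [m0 [Hm0 Hm0']].
  { apply continuity_plus; apply continuity_mult; apply Hcont; auto. }
  { intros u _. destruct (Rlt_or_le 0 (D1 1%nat u * D1 1%nat u + D2 1%nat u * D2 1%nat u));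
      auto. exfalso. apply (Hreg u (D1 1%nat u) (D2 1%nat u) (HD1 0%nat u) (HD2 0%nat u)).
    pose proof (Rle_0_sqr (D1 1%nat u)). pose proof (Rle_0_sqr (D2 1%nat u)). unfold Rsqr in *.
    f_equal; nra. }
  set (eps := Rmin (1/2) (m0 / (4 * M1 * K + 1))).
  assert (Heps : 0 < eps <= 1/2)
    by (split; [apply Rmin_glb_lt; [lra|apply Rdiv_lt_0_compat; nra]|apply Rmin_l]).
  assert (HepsK : 2 * M1 * K * eps <= m0 / 2).
  { assert (eps * (4 * M1 * K + 1) <= m0); [|nra].
    apply (Rmult_le_reg_r (/ (4 * M1 * K + 1))); [apply Rinv_0_lt_compat; nra|].
    rewrite Rmult_assoc, Rinv_r, Rmult_1_r by nra. apply Rmin_r. }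
  destruct (curve_chord_lower_bound g1 g2 Hper Hinj (Hcont D1 HD1 0%nat) (Hcont D2 HD2 0%nat)
    eps ltac:(lra)) as [d0 [Hd0 Hd0']].
  set (h0 := Rmin 1 (d0 / 4)).
  assert (Hh0 : 0 < h0 <= 1) by (split; [apply Rmin_glb_lt; lra|apply Rmin_l]).
  assert (Hh0d0 : 2 * h0 * h0 < d0) by (pose proof (Rmin_r 1 (d0 / 4)) as H; fold h0 in H; nra).
  exists h0, (2 * K * (4 * M1 / m0) ^ 2). repeat split; try lra.
  - apply Rmult_le_pos; [lra|apply pow2_ge_0].
  - apply (curve_flat g1 g2 Hper Hinj (Hcont D1 HD1 0%nat) (Hcont D2 HD2 0%nat) eps d0 h0 Heps
      Hd0' Hh0d0 (D1 1%nat) (D2 1%nat) (D1 2%nat) (D2 2%nat)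
      (HD1 0%nat) (HD2 0%nat) (HD1 1%nat) (HD2 1%nat) M1 K m0 HM1 HK Hm0 Hm0' HepsK).
Qed.

(** * Taylor coefficients in the frame of [L_T] *)

Lemma inv_fact_bounds p : 0 < / INR (fact p) <= 1.
Proof.
  assert (1 <= INR (fact p)) by (apply (le_INR 1), lt_O_fact).
  split; [apply Rinv_0_lt_compat; lra|]. rewrite <- Rinv_1. apply Rinv_le_contravar; lra.
Qed.

Lemma pow_le_succ_pow x p k : 0 <= x -> (p <= k)%nat -> x ^ p <= (1 + x) ^ k.
Proof.
  intros Hx Hp. apply Rle_trans with ((1 + x) ^ p); [apply pow_incr; lra|apply Rle_pow; [lra|auto]].
Qed.

Lemma Rabs_taylor_term c t p : Rabs (c / INR (fact p) * t ^ p) <= Rabs c * Rabs t ^ p.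
Proof.
  unfold Rdiv. rewrite !Rabs_mult, <- RPow_abs.
  pose proof (inv_fact_bounds p) as [F1 F2]. rewrite (Rabs_right (/ _)) by lra.
  pose proof (Rabs_pos c). pose proof (pow_le (Rabs t) p (Rabs_pos t)).
  apply Rmult_le_compat_r; [auto|]. rewrite <- (Rmult_1_r (Rabs c)) at 2.
  apply Rmult_le_compat_l; lra.
Qed.

Section TaylorCoefficients.
Variables (k : nat) (v : poly2) (y e eta : pt).
Hypothesis Hk : (0 < k)%nat.
Hypothesis Hv : deg_le k v.

Definition tcoef j p := peval k (pdirn p e (pdirn j eta v)) y.

Lemma tcoef_gt_k j p : (k < j)%nat -> tcoef j p = 0.
Proof.
  intros Hj. apply peval_pzero, pzero_pdirn, (pzero_pdirn_gt k); auto.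
Qed.

Lemma tcoef_gt_deg j p : (j <= k)%nat -> (k - j < p)%nat -> tcoef j p = 0.
Proof.
  intros Hj Hp. apply peval_pzero, (pzero_pdirn_gt (k - j)); auto. apply deg_le_pdirn; auto.
Qed.

Definition tpoly j t := sum_f_R0 (fun p => tcoef j p / INR (fact p) * t ^ p) k.

Lemma taylor_frame_pdirn_eta l t s : (l <= k)%nat ->
  peval k (pdirn (k - l) eta v) (padd (padd y (pscale t e)) (pscale s eta)) =
  sum_f_R0 (fun q => tpoly (q + (k - l)) t / INR (fact q) * s ^ q) k.
Proof.
  intros Hl. rewrite taylor_frame by (auto; apply deg_le_pdirn_same; auto).
  apply sum_eq; intros q _. unfold tpoly, tcoef. rewrite pdirn_add. reflexivity.
Qed.

Variables (r Sd : R) (xs ss : nat -> nat -> R) (A Bs Gd Lam : R).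
Hypothesis Hr : 0 < r.
Hypothesis HSd : 0 <= Sd.
Hypothesis HA : 0 <= A.
Hypothesis HBs : 0 <= Bs.
Hypothesis HLam : 0 <= Lam.
Hypothesis Hdata : forall l i, (l <= k)%nat -> (i <= l)%nat ->
  Rabs (peval k (pdirn (k - l) eta v) (padd (padd y (pscale (xs l i * r) e)) (pscale (ss l i) eta)))
    <= r ^ l * Sd.
Hypothesis Hxs : forall l i, (l <= k)%nat -> (i <= l)%nat -> Rabs (xs l i) <= A.
Hypothesis Hgap : forall l i, (l <= k)%nat -> (i < l)%nat -> xs l i + Gd <= xs l (S i).
Hypothesis Hss : forall l i, (l <= k)%nat -> (i <= l)%nat -> Rabs (ss l i) <= Bs * r.
Hypothesis HLamP : forall n, (n <= k)%nat ->
  forall (a x : nat -> R) V, (forall i, (i <= n)%nat -> Rabs (x i) <= A) ->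
  (forall i, (i < n)%nat -> x i + Gd <= x (S i)) ->
  (forall i, (i <= n)%nat -> Rabs (ueval n a (x i)) <= V) ->
  forall p, (p <= n)%nat -> Rabs (a p) <= Lam * V.

(* The coefficients of order [k - l] in [eta] are [O(r^(l - p))] in units of [Sd]; the
   levels are proved by induction on [l]. *)
Definition level_bound l Ch := forall p, Rabs (tcoef (k - l) p) * r ^ p <= Ch * r ^ l * Sd.

Definition remainder_const := INR (S k) * INR (S k) * (1 + A) ^ k * (1 + Bs) ^ k.
Definition interp_const := INR (fact k) * Lam.

Lemma remainder_const_nonneg : 0 <= remainder_const.
Proof. unfold remainder_const. repeat apply Rmult_le_pos; try apply pos_INR; apply pow_le; lra. Qed.

Lemma interp_const_nonneg : 0 <= interp_const.
Proof. unfold interp_const. apply Rmult_le_pos; auto. apply pos_INR. Qed.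

Lemma tpoly_bound j t l Ch : 0 <= Ch -> Rabs t <= A * r ->
  (forall p, Rabs (tcoef j p) * r ^ p <= Ch * r ^ l * Sd) ->
  Rabs (tpoly j t) <= INR (S k) * ((1 + A) ^ k * (Ch * r ^ l * Sd)).
Proof.
  intros HCh Ht Hb. unfold tpoly. apply sum_f_R0_abs_le. intros p Hp.
  eapply Rle_trans; [apply Rabs_taylor_term|].
  assert (T1 : Rabs t ^ p <= A ^ p * r ^ p).
  { rewrite <- Rpow_mult_distr. apply pow_incr. split; [apply Rabs_pos|auto]. }
  pose proof (pow_le_succ_pow A p k HA Hp). pose proof (Hb p).
  pose proof (Rabs_pos (tcoef j p)). pose proof (pow_le r p ltac:(lra)). pose proof (pow_le A p HA).
  apply Rle_trans with (A ^ p * (Rabs (tcoef j p) * r ^ p)).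
  - replace (A ^ p * (Rabs (tcoef j p) * r ^ p)) with (Rabs (tcoef j p) * (A ^ p * r ^ p)) by ring.
    apply Rmult_le_compat_l; auto.
  - apply Rmult_le_compat; try apply Rmult_le_pos; auto.
Qed.

Lemma taylor_remainder_term_bound L Ch t s q : (L <= k)%nat -> 0 <= Ch ->
  (forall l, (l < L)%nat -> level_bound l Ch) -> Rabs t <= A * r -> Rabs s <= Bs * r ->
  (q < k)%nat ->
  Rabs (tpoly (S q + (k - L)) t / INR (fact (S q)) * s ^ S q)
    <= INR (S k) * ((1 + A) ^ k * (1 + Bs) ^ k * (Ch * r ^ L * Sd)).
Proof.
  intros HL HCh IH Ht Hs Hq.
  assert (B0 : 0 <= INR (S k) * ((1 + A) ^ k * (1 + Bs) ^ k * (Ch * r ^ L * Sd))).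
  { repeat apply Rmult_le_pos; try apply pos_INR; try (apply pow_le; lra); auto. }
  destruct (le_lt_dec (S q) L) as [HqL|HqL].
  2:{ unfold tpoly. rewrite (sum_f_R0_eq_0 _ k); [unfold Rdiv; rewrite !Rmult_0_l, Rabs_R0; auto|].
      intros p _. rewrite tcoef_gt_k by lia. unfold Rdiv; ring. }
  set (l := (L - S q)%nat).
  replace (S q + (k - L))%nat with (k - l)%nat by (unfold l; lia).
  pose proof (tpoly_bound (k - l) t l Ch HCh Ht (IH l ltac:(unfold l; lia))) as HU.
  eapply Rle_trans; [apply Rabs_taylor_term|].
  assert (Hsq : Rabs s ^ S q <= (1 + Bs) ^ k * r ^ S q).
  { apply Rle_trans with ((Bs * r) ^ S q).
    - apply pow_incr; split; [apply Rabs_pos|auto].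
    - rewrite !Rpow_mult_distr. apply Rmult_le_compat_r; [apply pow_le; lra|].
      apply pow_le_succ_pow; auto; lia. }
  assert (Hrl : r ^ l * r ^ S q = r ^ L) by (rewrite <- pow_add; f_equal; unfold l; lia).
  pose proof (pow_le (Rabs s) (S q) (Rabs_pos s)).
  apply Rle_trans with (INR (S k) * ((1 + A) ^ k * (Ch * r ^ l * Sd)) * ((1 + Bs) ^ k * r ^ S q)).
  - apply Rmult_le_compat; auto using Rabs_pos.
  - right. rewrite <- Hrl. ring.
Qed.

Lemma taylor_remainder_bound L Ch t s : (L <= k)%nat -> 0 <= Ch ->
  (forall l, (l < L)%nat -> level_bound l Ch) -> Rabs t <= A * r -> Rabs s <= Bs * r ->
  Rabs (sum_f_R0 (fun q => tpoly (S q + (k - L)) t / INR (fact (S q)) * s ^ S q) (pred k))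
    <= remainder_const * Ch * r ^ L * Sd.
Proof.
  intros HL HCh IH Ht Hs.
  eapply Rle_trans; [apply sum_f_R0_abs_le; intros q Hq;
    apply (taylor_remainder_term_bound L Ch t s q); auto; lia|].
  replace (INR (S (pred k))) with (INR k) by (f_equal; lia).
  assert (INR k <= INR (S k)) by (apply le_INR; lia).
  assert (0 <= INR (S k) * ((1 + A) ^ k * (1 + Bs) ^ k * (Ch * r ^ L * Sd))).
  { repeat apply Rmult_le_pos; try apply pos_INR; try (apply pow_le; lra); auto. }
  unfold remainder_const.
  apply Rle_trans with (INR (S k) * (INR (S k) * ((1 + A) ^ k * (1 + Bs) ^ k * (Ch * r ^ L * Sd)))).
  - apply Rmult_le_compat_r; auto.
  - right; ring.
Qed.

Lemma tpoly_at_nodes_bound L Ch i : (L <= k)%nat -> 0 <= Ch -> (i <= L)%nat ->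
  (forall l, (l < L)%nat -> level_bound l Ch) ->
  Rabs (tpoly (k - L) (xs L i * r)) <= (1 + remainder_const * Ch) * r ^ L * Sd.
Proof.
  intros HL HCh Hi IH.
  assert (Ht : Rabs (xs L i * r) <= A * r).
  { rewrite Rabs_mult, (Rabs_right r) by lra. apply Rmult_le_compat_r; [lra|auto]. }
  pose proof (taylor_remainder_bound L Ch _ _ HL HCh IH Ht (Hss L i HL Hi)) as HRm.
  pose proof (Hdata L i HL Hi) as Hd.
  rewrite taylor_frame_pdirn_eta, decomp_sum in Hd by auto.
  replace (tpoly (0 + (k - L)) (xs L i * r) / INR (fact 0) * ss L i ^ 0)
    with (tpoly (k - L) (xs L i * r)) in Hd by (simpl; field).
  set (X := tpoly (k - L) (xs L i * r)) in *.
  set (Rm := sum_f_R0 _ (pred k)) in HRm, Hd.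
  replace X with ((X + Rm) + - Rm) by ring.
  pose proof (Rabs_triang (X + Rm) (- Rm)). rewrite Rabs_Ropp in *. lra.
Qed.

Lemma level_step L Ch : (L <= k)%nat -> 0 <= Ch -> (forall l, (l < L)%nat -> level_bound l Ch) ->
  level_bound L (interp_const * (1 + remainder_const * Ch)).
Proof.
  intros HL HCh IH p.
  set (V := (1 + remainder_const * Ch) * r ^ L * Sd).
  assert (HV : 0 <= V).
  { pose proof remainder_const_nonneg. unfold V.
    apply Rmult_le_pos; [apply Rmult_le_pos; [nra|apply pow_le; lra]|auto]. }
  destruct (le_lt_dec p L) as [HpL|HpL].
  2:{ rewrite tcoef_gt_deg, Rabs_R0, Rmult_0_l by lia. pose proof interp_const_nonneg.
      fold V. replace (interp_const * (1 + remainder_const * Ch) * r ^ L * Sd) with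
        (interp_const * V) by (unfold V; ring). apply Rmult_le_pos; auto. }
  set (a := fun p => tcoef (k - L) p / INR (fact p) * r ^ p).
  assert (Ha : Rabs (a p) <= Lam * V).
  { apply (HLamP L HL a (xs L) V); auto. intros i Hi.
    rewrite <- (ueval_ext_deg L k) by
      (auto; intros p' Hp'; unfold a; rewrite tcoef_gt_deg by lia; unfold Rdiv; ring).
    eapply Rle_trans; [|apply (tpoly_at_nodes_bound L Ch i); auto]. right. f_equal.
    unfold ueval, tpoly, a. apply sum_eq; intros p' _. rewrite Rpow_mult_distr. ring. }
  pose proof (inv_fact_bounds p) as [F1 F2].
  assert (Hf : 1 <= INR (fact p) <= INR (fact k))
    by (split; [apply (le_INR 1), lt_O_fact|apply le_INR, fact_le; lia]).
  unfold a, Rdiv in Ha. rewrite !Rabs_mult, (Rabs_right (/ _)), (Rabs_right (r ^ p)) in Ha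
    by (lra || (apply Rle_ge, pow_le; lra)).
  replace (Rabs (tcoef (k - L) p) * r ^ p) with
    (INR (fact p) * (Rabs (tcoef (k - L) p) * / INR (fact p) * r ^ p)) by (field; lra).
  replace (interp_const * (1 + remainder_const * Ch) * r ^ L * Sd) with
    (INR (fact k) * (Lam * V)) by (unfold interp_const, V; ring).
  assert (0 <= Lam * V) by (apply Rmult_le_pos; auto).
  apply Rmult_le_compat; try lra. apply Rmult_le_pos; [apply Rmult_le_pos; [apply Rabs_pos|lra]|].
  apply pow_le; lra.
Qed.

Fixpoint level_const (n : nat) : R :=
  match n with
  | O => interp_const
  | S n => level_const n + interp_const * (1 + remainder_const * level_const n)
  end.

Lemma level_const_nonneg n : 0 <= level_const n.
Proof.
  pose proof remainder_const_nonneg. pose proof interp_const_nonneg.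
  induction n as [|n IH]; simpl; auto.
  assert (0 <= remainder_const * level_const n) by (apply Rmult_le_pos; auto).
  assert (0 <= interp_const * (1 + remainder_const * level_const n)) by (apply Rmult_le_pos; lra).
  lra.
Qed.

Lemma level_bound_mono l Ch Ch' : Ch <= Ch' -> level_bound l Ch -> level_bound l Ch'.
Proof.
  intros H HP p. eapply Rle_trans; [apply HP|].
  apply Rmult_le_compat_r; [auto|]. apply Rmult_le_compat_r; [apply pow_le; lra|auto].
Qed.

Lemma level_bound_all l : (l <= k)%nat -> forall l', (l' <= l)%nat -> level_bound l' (level_const l).
Proof.
  induction l as [|l IH]; intros Hl l' Hl'.
  - replace l' with 0%nat by lia.
    eapply level_bound_mono; [|apply (level_step 0 0); [lia|lra|intros; lia]].
    simpl. right; ring.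
  - pose proof (level_const_nonneg l). pose proof remainder_const_nonneg.
    pose proof interp_const_nonneg.
    assert (Hle : level_const l <= level_const (S l)).
    { simpl. assert (0 <= remainder_const * level_const l) by (apply Rmult_le_pos; auto).
      assert (0 <= interp_const * (1 + remainder_const * level_const l)) by (apply Rmult_le_pos; lra).
      lra. }
    destruct (Nat.eq_dec l' (S l)) as [->|Hne].
    + eapply level_bound_mono; [|apply (level_step (S l) (level_const l)); auto].
      * simpl. lra.
      * intros l'' Hl''. apply IH; lia.
    + eapply level_bound_mono; [exact Hle|]. apply IH; lia.
Qed.

Lemma tcoef_scaled_bound H j p : r <= H ->
  Rabs (tcoef j p) * H ^ (j + p) <= level_const k * H ^ k * Sd.
Proof.
  intros HrH. pose proof (level_const_nonneg k).
  assert (HC : 0 <= level_const k * H ^ k * Sd)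
    by (apply Rmult_le_pos; [apply Rmult_le_pos; [auto|apply pow_le; lra]|auto]).
  destruct (le_lt_dec j k) as [Hj|Hj]; [|rewrite tcoef_gt_k, Rabs_R0, Rmult_0_l by auto; auto].
  destruct (le_lt_dec p (k - j)) as [Hp|Hp];
    [|rewrite tcoef_gt_deg, Rabs_R0, Rmult_0_l by auto; auto].
  pose proof (level_bound_all k (le_n k) (k - j) ltac:(lia) p) as Hb.
  replace (k - (k - j))%nat with j in Hb by lia.
  replace (r ^ (k - j)) with (r ^ p * r ^ (k - j - p)) in Hb by (rewrite <- pow_add; f_equal; lia).
  assert (Hrp : 0 < r ^ p) by (apply pow_lt; lra).
  assert (Hb' : Rabs (tcoef j p) <= level_const k * r ^ (k - j - p) * Sd).
  { apply (Rmult_le_reg_r (r ^ p)); auto. eapply Rle_trans; [exact Hb|]. right; ring. }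
  assert (Hrr : r ^ (k - j - p) <= H ^ (k - j - p)) by (apply pow_incr; lra).
  pose proof (pow_le H (j + p) ltac:(lra)).
  replace (H ^ k) with (H ^ (k - j - p) * H ^ (j + p)) by (rewrite <- pow_add; f_equal; lia).
  apply Rle_trans with (level_const k * H ^ (k - j - p) * Sd * H ^ (j + p)); [|right; ring].
  apply Rmult_le_compat_r; auto. eapply Rle_trans; [exact Hb'|].
  apply Rmult_le_compat_r; auto. apply Rmult_le_compat_l; auto.
Qed.

End TaylorCoefficients.

(** * The estimate on one element *)

Lemma fmax_ge n f i : (i <= n)%nat -> f i <= fmax n f.
Proof.
  induction n as [|n IH]; intros Hi; simpl.
  - replace i with 0%nat by lia. lra.
  - destruct (Nat.eq_dec i (S n)) as [->|Hne]; [apply Rmax_r|].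
    eapply Rle_trans; [apply IH; lia|apply Rmax_l].
Qed.

Lemma sqrt_sum_sq_le a b : sqrt (a ^ 2 + b ^ 2) <= Rabs a + Rabs b.
Proof.
  pose proof (Rabs_pos a). pose proof (Rabs_pos b).
  rewrite <- (sqrt_square (Rabs a + Rabs b)) by lra. apply sqrt_le_1_alt.
  rewrite <- (pow2_abs a), <- (pow2_abs b). nra.
Qed.

(* The matrix with rows [e] and [eta] has orthonormal columns. *)
Definition orthonormal (e eta : pt) : Prop :=
  fst e * fst e + fst eta * fst eta = 1 /\ snd e * snd e + snd eta * snd eta = 1 /\
  fst e * snd e + fst eta * snd eta = 0.

Lemma orthonormal_of_rows (e eta : pt) :
  fst e * fst e + snd e * snd e = 1 -> fst eta * fst eta + snd eta * snd eta = 1 ->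
  fst e * fst eta + snd e * snd eta = 0 -> orthonormal e eta.
Proof.
  destruct e as [e1 e2], eta as [n1 n2]. unfold orthonormal; simpl.
  intros He Hn Hen. set (D := e1 * n2 - e2 * n1).
  assert (Hn1 : n1 = - e2 * D).
  { transitivity (n1 * (e1 * e1 + e2 * e2)); [rewrite He; ring|].
    transitivity (e1 * (e1 * n1 + e2 * n2) - e2 * D); [unfold D; ring|]. rewrite Hen. ring. }
  assert (Hn2 : n2 = e1 * D).
  { transitivity (n2 * (e1 * e1 + e2 * e2)); [rewrite He; ring|].
    transitivity (e2 * (e1 * n1 + e2 * n2) + e1 * D); [unfold D; ring|]. rewrite Hen. ring. }
  assert (HD : D * D = 1).
  { rewrite Hn1, Hn2 in Hn. transitivity (D * D * (e1 * e1 + e2 * e2)); [rewrite He; ring|].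
    rewrite <- Hn. ring. }
  rewrite Hn1, Hn2. repeat split.
  - transitivity (e1 * e1 + e2 * e2 * (D * D)); [ring|]. rewrite HD. lra.
  - transitivity (e2 * e2 + e1 * e1 * (D * D)); [ring|]. rewrite HD. lra.
  - transitivity (e1 * e2 * (1 - D * D)); [ring|]. rewrite HD. ring.
Qed.

Lemma orthonormal_decomp y e eta p : orthonormal e eta ->
  p = padd (padd y (pscale (pdot e (psub p y)) e)) (pscale (pdot eta (psub p y)) eta).
Proof.
  intros [O1 [O2 O3]]. unfold pdot, psub, padd, pscale. destruct p as [p1 p2]. simpl. f_equal.
  - transitivity (fst y + ((p1 - fst y) * (fst e * fst e + fst eta * fst eta) +
                   (p2 - snd y) * (fst e * snd e + fst eta * snd eta))); [rewrite O1, O3|]; ring.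
  - transitivity (snd y + ((p1 - fst y) * (fst e * snd e + fst eta * snd eta) +
                   (p2 - snd y) * (snd e * snd e + snd eta * snd eta))); [rewrite O2, O3|]; ring.
Qed.

Lemma gradnorm_le_orthonormal k v p e eta : orthonormal e eta ->
  gradnorm k v p <= Rabs (peval k (pdir e v) p) + Rabs (peval k (pdir eta v) p).
Proof.
  intros [O1 [O2 O3]]. rewrite !peval_pdir. unfold gradnorm.
  eapply Rle_trans; [|apply sqrt_sum_sq_le]. right. f_equal.
  set (vx := peval k (pdx v) p). set (vy := peval k (pdy v) p).
  transitivity (vx ^ 2 * (fst e * fst e + fst eta * fst eta) + vy ^ 2 * (snd e * snd e + snd eta * snd eta)
                + 2 * vx * vy * (fst e * snd e + fst eta * snd eta)); [rewrite O1, O2, O3|]; ring.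
Qed.

Lemma taylor_double_sum_bound k (b : nat -> nat -> R) d M H t s :
  0 <= H -> Rabs t <= H -> Rabs s <= H ->
  (forall j p, Rabs (b j p) * H ^ (j + p + d) <= M) ->
  Rabs (sum_f_R0 (fun j => sum_f_R0 (fun p => b j p / INR (fact p) * t ^ p) k / INR (fact j) * s ^ j) k)
    * H ^ d <= INR (S k) * (INR (S k) * M).
Proof.
  intros HH Ht Hs Hb.
  pose proof (pow_le H d HH) as Hd0.
  rewrite <- (Rabs_right (H ^ d)), <- Rabs_mult, Rmult_comm, scal_sum by lra.
  apply sum_f_R0_abs_le. intros j _.
  replace (sum_f_R0 (fun p => b j p / INR (fact p) * t ^ p) k / INR (fact j) * s ^ j * H ^ d) with
    (sum_f_R0 (fun p => b j p / INR (fact p) * t ^ p * (/ INR (fact j) * s ^ j * H ^ d)) k)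
    by (rewrite <- scal_sum; unfold Rdiv; ring).
  apply sum_f_R0_abs_le. intros p _.
  replace (b j p / INR (fact p) * t ^ p * (/ INR (fact j) * s ^ j * H ^ d)) with
    ((b j p / INR (fact p) * t ^ p) * (1 / INR (fact j) * s ^ j) * H ^ d) by (unfold Rdiv; ring).
  pose proof (Rabs_taylor_term (b j p) t p). pose proof (Rabs_taylor_term 1 s j).
  rewrite Rabs_R1, Rmult_1_l in *.
  set (T := b j p / INR (fact p) * t ^ p) in *. set (S := 1 / INR (fact j) * s ^ j) in *.
  rewrite !Rabs_mult, (Rabs_right (H ^ d)) by lra.
  assert (T1 : Rabs t ^ p <= H ^ p) by (apply pow_incr; split; [apply Rabs_pos|auto]).
  assert (T2 : Rabs s ^ j <= H ^ j) by (apply pow_incr; split; [apply Rabs_pos|auto]).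
  pose proof (Rabs_pos (b j p)). pose proof (pow_le _ p (Rabs_pos t)).
  pose proof (Rabs_pos T). pose proof (Rabs_pos S).
  eapply Rle_trans; [|apply (Hb j p)].
  replace (Rabs (b j p) * H ^ (j + p + d)) with (Rabs (b j p) * H ^ p * H ^ j * H ^ d)
    by (rewrite !Rmult_assoc, <- !pow_add; do 2 f_equal; lia).
  apply Rmult_le_compat_r; auto.
  apply Rmult_le_compat; auto; [|lra].
  eapply Rle_trans; [eassumption|]. apply Rmult_le_compat_l; auto.
Qed.

Lemma taylor_frame_bounds k v y e eta H M t s : (0 < k)%nat -> deg_le k v ->
  0 <= H -> Rabs t <= H -> Rabs s <= H ->
  (forall j p, Rabs (tcoef k v y e eta j p) * H ^ (j + p) <= M) ->
  let p := padd (padd y (pscale t e)) (pscale s eta) in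
  Rabs (peval k v p) <= INR (S k) * (INR (S k) * M) /\
  Rabs (peval k (pdir e v) p) * H <= INR (S k) * (INR (S k) * M) /\
  Rabs (peval k (pdir eta v) p) * H <= INR (S k) * (INR (S k) * M).
Proof.
  intros Hk Hv HH Ht Hs Hb p.
  assert (Hd : forall w, deg_le k w -> forall (b : nat -> nat -> R),
    (forall j q, peval k (pdirn q e (pdirn j eta w)) y = b j q) ->
    (forall j q, Rabs (b j q) * H ^ (j + q + 1) <= M) ->
    Rabs (peval k w p) * H <= INR (S k) * (INR (S k) * M)).
  { intros w Hw b Hwb Hbd. unfold p. rewrite taylor_frame by auto.
    rewrite <- (pow_1 H). eapply Rle_trans; [|apply (taylor_double_sum_bound k b 1 M H t s); auto].
    right. f_equal. f_equal. apply sum_eq; intros j _. f_equal. f_equal.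
    apply sum_eq; intros q _. rewrite Hwb. reflexivity. }
  split; [|split].
  - unfold p. rewrite taylor_frame by auto. rewrite <- (Rmult_1_r (Rabs _)), <- (pow_O H).
    apply taylor_double_sum_bound; auto. intros j q. rewrite Nat.add_0_r. apply Hb.
  - apply (Hd _ (deg_le_pdirn_same k e v Hv 1) (fun j q => tcoef k v y e eta j (S q))).
    + intros j q. unfold tcoef. rewrite pdirn_pdir_comm, pdirn_pdir. reflexivity.
    + intros j q. replace (j + q + 1)%nat with (j + S q)%nat by lia. apply Hb.
  - apply (Hd _ (deg_le_pdirn_same k eta v Hv 1) (fun j q => tcoef k v y e eta (S j) q)).
    + intros j q. unfold tcoef. rewrite pdirn_pdir. reflexivity.
    + intros j q. replace (j + q + 1)%nat with (S j + q)%nat by lia. apply Hb.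
Qed.

Lemma pdist_pos p q : p <> q -> 0 < pdist p q.
Proof.
  intros Hpq. unfold pdist, pnorm, pdot, psub; simpl. apply sqrt_lt_R0.
  destruct (Req_dec (fst p) (fst q)) as [E1|E1];
    [destruct (Req_dec (snd p) (snd q)) as [E2|E2]|].
  - exfalso. apply Hpq. destruct p, q; simpl in *; subst; reflexivity.
  - pose proof (Rle_0_sqr (fst p - fst q)). unfold Rsqr in *.
    assert (0 < (snd p - snd q) * (snd p - snd q)) by (apply Rsqr_pos_lt; lra). lra.
  - pose proof (Rle_0_sqr (snd p - snd q)). unfold Rsqr in *.
    assert (0 < (fst p - fst q) * (fst p - fst q)) by (apply Rsqr_pos_lt; lra). lra.
Qed.

Lemma pdist_le_2_diamT A B C p q : in_tri A B C p -> in_tri A B C q -> pdist p q <= 2 * diamT A B C.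
Proof.
  intros Hp Hq. pose proof (in_tri_coord_diff A B C fst p q (or_introl eq_refl) Hp Hq).
  pose proof (in_tri_coord_diff A B C snd p q (or_intror eq_refl) Hp Hq).
  eapply Rle_trans; [|instantiate (1 := Rabs (fst p - fst q) + Rabs (snd p - snd q)); lra].
  unfold pdist, pnorm, pdot, psub; simpl.
  eapply Rle_trans; [|apply sqrt_sum_sq_le]. right. f_equal. ring.
Qed.

Lemma pnorm_1_coords (eta : pt) : pnorm eta = 1 ->
  fst eta * fst eta + snd eta * snd eta = 1 /\ Rabs (fst eta) <= 1 /\ Rabs (snd eta) <= 1.
Proof.
  unfold pnorm, pdot. intros H.
  assert (Hn : fst eta * fst eta + snd eta * snd eta = 1).
  { rewrite <- (sqrt_sqrt (fst eta * fst eta + snd eta * snd eta)) by nra. rewrite H. ring. }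
  split; [auto|]. split; apply Rabs_le; split; nra.
Qed.

Definition seg_dir (y z : pt) : pt := pscale (/ pdist y z) (psub z y).

Lemma seg_dir_orthonormal y z eta : y <> z -> pnorm eta = 1 -> pdot eta (psub z y) = 0 ->
  orthonormal (seg_dir y z) eta.
Proof.
  intros Hyz Heta Hez. pose proof (pdist_pos y z Hyz) as Hr.
  assert (Hr2 : pdist y z * pdist y z = pdot (psub z y) (psub z y)).
  { unfold pdist, pnorm, pdot, psub; simpl.
    pose proof (Rle_0_sqr (fst y - fst z)). pose proof (Rle_0_sqr (snd y - snd z)).
    unfold Rsqr in *. rewrite sqrt_sqrt; [ring|lra]. }
  destruct (pnorm_1_coords eta Heta) as [Hee _].
  unfold seg_dir, pdot, psub, pscale in *; simpl in *.
  apply orthonormal_of_rows; simpl; auto.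
  - field_simplify_eq; [|lra]. lra.
  - transitivity (/ pdist y z * (fst eta * (fst z - fst y) + snd eta * (snd z - snd y)));
      [ring|]. rewrite Hez. ring.
Qed.

Lemma GL_point_frame y z eta gi t : y <> z -> pnorm eta = 1 -> pdot eta (psub z y) = 0 ->
  let X := padd (GL_point y z gi) (pscale t eta) in
  X = padd (padd y (pscale ((1 + gi) / 2 * pdist y z) (seg_dir y z)))
        (pscale (pdot eta (psub X y)) eta).
Proof.
  intros Hyz Heta Hez X. pose proof (pdist_pos y z Hyz) as Hr.
  destruct (pnorm_1_coords eta Heta) as [Hee _].
  assert (Ht : pdot eta (psub X y) = t).
  { unfold X, GL_point, pdot, psub, padd, pscale in *; simpl in *.
    transitivity ((1 + gi) / 2 * (fst eta * (fst z - fst y) + snd eta * (snd z - snd y)) +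
                  t * (fst eta * fst eta + snd eta * snd eta)); [ring|]. rewrite Hez, Hee. ring. }
  rewrite Ht. unfold X, seg_dir, GL_point, padd, pscale, psub. simpl. f_equal; field; lra.
Qed.

Lemma le_weighted_fmax_sum (F : nat -> nat -> R) r n l i : 0 < r ->
  (forall l i, 0 <= F l i) -> (l <= n)%nat -> (i <= l)%nat ->
  F l i <= r ^ l * sum_f_R0 (fun l => / r ^ l * fmax l (F l)) n.
Proof.
  intros Hr HF Hl Hi. pose proof (pow_lt r l Hr) as Hrl.
  assert (Hterm : forall l, 0 <= / r ^ l * fmax l (F l)).
  { intros l'. apply Rmult_le_pos; [apply Rlt_le, Rinv_0_lt_compat, pow_lt; lra|].
    eapply Rle_trans; [apply (HF l' 0%nat)|apply fmax_ge; lia]. }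
  pose proof (sum_f_R0_ge_term (fun l => / r ^ l * fmax l (F l)) n l (fun l _ => Hterm l) Hl).
  pose proof (fmax_ge l (F l) i Hi).
  replace (F l i) with (r ^ l * (/ r ^ l * F l i)) by (field; lra).
  apply Rmult_le_compat_l; [lra|]. eapply Rle_trans; [|eassumption].
  apply Rmult_le_compat_l; [apply Rlt_le, Rinv_0_lt_compat; lra|auto].
Qed.

Definition element_const (k : nat) (G Bc Lam : R) : R :=
  2 * (INR (S k) * (INR (S k) * level_const k ((1 + G) / 2) (2 * Bc) Lam k)) * 2 ^ k + 1.

Lemma element_const_pos k G Bc Lam : 0 <= G -> 0 <= Bc -> 0 <= Lam -> 0 < element_const k G Bc Lam.
Proof.
  intros HG HBc HLam. unfold element_const.
  assert (0 <= level_const k ((1 + G) / 2) (2 * Bc) Lam k) by (apply level_const_nonneg; lra).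
  pose proof (pos_INR (S k)). pose proof (pow_le 2 k ltac:(lra)).
  assert (0 <= 2 * (INR (S k) * (INR (S k) * level_const k ((1 + G) / 2) (2 * Bc) Lam k)) * 2 ^ k)
    by (repeat apply Rmult_le_pos; lra).
  lra.
Qed.

Section Element.
Variables (g1 g2 : R -> R) (k : nat) (h0 Bc G dg Lam : R).
Hypothesis Hk : (1 <= k)%nat.
Hypothesis Hh01 : h0 <= 1.
Hypothesis HBc : 0 <= Bc.
Hypothesis Hflat : flat_in_small_triangles g1 g2 h0 Bc.
Hypothesis HG : 0 <= G.
Hypothesis HGL : forall l, (l <= k)%nat -> GL_bounded_separated l G dg.
Hypothesis HLam : 0 <= Lam.
Hypothesis HLamP : forall n, (n <= k)%nat ->
  forall (a x : nat -> R) V, (forall i, (i <= n)%nat -> Rabs (x i) <= (1 + G) / 2) ->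
  (forall i, (i < n)%nat -> x i + dg / 2 <= x (S i)) ->
  (forall i, (i <= n)%nat -> Rabs (ueval n a (x i)) <= V) ->
  forall p, (p <= n)%nat -> Rabs (a p) <= Lam * V.

Variables (a b c y z eta : pt) (g : nat -> nat -> R) (X : nat -> nat -> pt) (v : poly2).
Hypothesis HD : nondegenerate a b c.
Hypothesis Hh : diamT a b c <= h0.
Hypothesis Hyz : y <> z.
Hypothesis Hy : on_curve g1 g2 y.
Hypothesis Hz : on_curve g1 g2 z.
Hypothesis Hyb : on_bdry a b c y.
Hypothesis Hzb : on_bdry a b c z.
Hypothesis Hbd : forall x, on_curve g1 g2 x -> on_bdry a b c x -> x = y \/ x = z.
Hypothesis Heta : pnorm eta = 1.
Hypothesis Hez : pdot eta (psub z y) = 0.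
Hypothesis HGLn : forall l, (l <= k)%nat -> GL_nodes l (g l).
Hypothesis HX : forall l i, (l <= k)%nat -> (i <= l)%nat ->
  on_curve g1 g2 (X l i) /\ in_tri a b c (X l i) /\
  exists t : R, X l i = padd (GL_point y z (g l i)) (pscale t eta).
Hypothesis Hv : deg_le k v.

Let Sv := sum_f_R0 (fun l =>
  / pdist y z ^ l * fmax l (fun i => Rabs (peval k (pdirn (k - l) eta v) (X l i)))) k.

Lemma data_sum_nonneg : 0 <= Sv.
Proof.
  pose proof (pdist_pos y z Hyz) as Hr.
  apply cond_pos_sum. intros l. apply Rmult_le_pos; [apply Rlt_le, Rinv_0_lt_compat, pow_lt; lra|].
  eapply Rle_trans;
    [|apply (fmax_ge l (fun i => Rabs (peval k (pdirn (k - l) eta v) (X l i))) 0%nat); lia].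
  apply Rabs_pos.
Qed.

Lemma element_tcoef_bound j p :
  Rabs (tcoef k v y (seg_dir y z) eta j p) * (2 * diamT a b c) ^ (j + p) <=
  level_const k ((1 + G) / 2) (2 * Bc) Lam k * (2 * diamT a b c) ^ k * Sv.
Proof.
  pose proof (pdist_pos y z Hyz) as Hr.
  assert (HrT : pdist y z <= 2 * diamT a b c) by (apply pdist_le_2_diamT; apply on_bdry_in_tri; auto).
  destruct (pnorm_1_coords eta Heta) as [_ [He1 He2]].
  pose proof data_sum_nonneg as HS.
  apply (tcoef_scaled_bound k v y (seg_dir y z) eta ltac:(lia) Hv (pdist y z) Sv
    (fun l i => (1 + g l i) / 2) (fun l i => pdot eta (psub (X l i) y)) ((1 + G) / 2) (2 * Bc)
    (dg / 2) Lam); auto; try lra.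
  - intros l i Hl Hi. destruct (HX l i Hl Hi) as [_ [_ [t Ht]]].
    pose proof (GL_point_frame y z eta (g l i) t Hyz Heta Hez) as E. cbv zeta in E.
    rewrite <- Ht in E. rewrite <- E.
    apply (le_weighted_fmax_sum (fun l i => Rabs (peval k (pdirn (k - l) eta v) (X l i))));
      auto using Rabs_pos.
  - intros l i Hl Hi. destruct (HGL l Hl (g l) (HGLn l Hl)) as [H1 _].
    pose proof (Rabs_le_between _ _ (H1 i Hi)). apply Rabs_le. lra.
  - intros l i Hl Hi. destruct (HGL l Hl (g l) (HGLn l Hl)) as [_ H2].
    pose proof (H2 i Hi). lra.
  - intros l i Hl Hi. destruct (HX l i Hl Hi) as [Hc1 [Hc2 _]].
    eapply Rle_trans; [apply (Hflat a b c HD Hh y z Hyz Hy Hz Hyb Hzb Hbd eta He1 He2 Hez); auto|].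
    assert (pdist y z <= 2) by lra.
    replace (Bc * pdist y z ^ 2) with (Bc * pdist y z * pdist y z) by ring.
    replace (2 * Bc * pdist y z) with (Bc * pdist y z * 2) by ring.
    apply Rmult_le_compat_l; [apply Rmult_le_pos|]; lra.
Qed.

Lemma element_estimate p : in_tri a b c p ->
  Rabs (peval k v p) <= element_const k G Bc Lam * diamT a b c ^ k * Sv /\
  diamT a b c * gradnorm k v p <= element_const k G Bc Lam * diamT a b c ^ k * Sv.
Proof.
  intros Hp. set (hT := diamT a b c). set (e := seg_dir y z).
  set (Cst := level_const k ((1 + G) / 2) (2 * Bc) Lam k).
  set (M := Cst * (2 * hT) ^ k * Sv).
  pose proof (seg_dir_orthonormal y z eta Hyz Heta Hez) as Hon. fold e in Hon.
  assert (Hy' : in_tri a b c y) by (apply on_bdry_in_tri; auto).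
  assert (HhT : 0 <= hT) by apply diamT_nonneg.
  assert (Hcoord : forall w : pt, Rabs (fst w) <= 1 -> Rabs (snd w) <= 1 ->
            Rabs (pdot w (psub p y)) <= 2 * hT).
  { intros w Hw1 Hw2. unfold pdot, psub; simpl. replace (2 * hT) with (2 * 1 * hT) by ring.
    apply dot_bound; auto;
      [apply (in_tri_coord_diff a b c fst)|apply (in_tri_coord_diff a b c snd)]; auto. }
  assert (He : Rabs (fst e) <= 1 /\ Rabs (snd e) <= 1)
    by (destruct Hon as [O1 [O2 _]]; split; apply Rabs_le; split; nra).
  destruct (pnorm_1_coords eta Heta) as [_ [He1 He2]].
  destruct (taylor_frame_bounds k v y e eta (2 * hT) M (pdot e (psub p y)) (pdot eta (psub p y))
    ltac:(lia) Hv ltac:(lra) (Hcoord e (proj1 He) (proj2 He)) (Hcoord eta He1 He2)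
    element_tcoef_bound) as [B0 [B1 B2]].
  rewrite <- (orthonormal_decomp y e eta p Hon) in B0, B1, B2.
  assert (HM : 0 <= M).
  { assert (0 <= Cst) by (apply level_const_nonneg; lra). pose proof data_sum_nonneg.
    unfold M. apply Rmult_le_pos; [apply Rmult_le_pos; [auto|apply pow_le; lra]|auto]. }
  assert (Hfin : INR (S k) * (INR (S k) * M) * 2 <= element_const k G Bc Lam * hT ^ k * Sv).
  { unfold element_const, M. fold Cst. rewrite Rpow_mult_distr.
    pose proof (Rmult_le_pos _ _ (pow_le hT k HhT) data_sum_nonneg).
    replace (INR (S k) * (INR (S k) * (Cst * (2 ^ k * hT ^ k) * Sv)) * 2) with
      (2 * (INR (S k) * (INR (S k) * Cst)) * 2 ^ k * (hT ^ k * Sv)) by ring.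
    rewrite (Rmult_assoc _ (hT ^ k)). apply Rmult_le_compat_r; [auto|lra]. }
  assert (0 <= INR (S k) * (INR (S k) * M)) by (apply Rmult_le_pos; [apply pos_INR|
    apply Rmult_le_pos; [apply pos_INR|auto]]).
  split; [lra|].
  pose proof (gradnorm_le_orthonormal k v p e eta Hon).
  apply Rle_trans with (hT * (Rabs (peval k (pdir e v) p) + Rabs (peval k (pdir eta v) p))).
  - apply Rmult_le_compat_l; auto.
  - lra.
Qed.

End Element.

Theorem lemma3p1 :
  forall (g1 g2 : R -> R), smooth_closed_curve g1 g2 ->
  forall (k : nat), (1 <= k)%nat ->
  forall (sigma : R),
  exists C h0 : R, 0 < C /\ 0 < h0 /\
  forall (a b c : pt),
    nondegenerate a b c -> shape_reg sigma a b c -> diamT a b c <= h0 ->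
  forall (y z : pt),
    (* y_T, z_T: the two (distinct) endpoints of T \cap Gamma; the standing
       assumption: Gamma meets dT exactly there, on different edges *)
    y <> z -> on_curve g1 g2 y -> on_curve g1 g2 z ->
    on_bdry a b c y -> on_bdry a b c z ->
    (forall x, on_curve g1 g2 x -> on_bdry a b c x -> x = y \/ x = z) ->
    ~ same_edge a b c y z ->
  forall (eta : pt),
    (* unit normal to L_T *)
    pnorm eta = 1 -> pdot eta (psub z y) = 0 ->
  forall (g : nat -> nat -> R) (X : nat -> nat -> pt),
    (* g l . = Gauss-Legendre nodes of order l+1, X l i = x_i^{l,T} *)
    (forall l, (l <= k)%nat -> GL_nodes l (g l)) ->
    (forall l i, (l <= k)%nat -> (i <= l)%nat ->
        on_curve g1 g2 (X l i) /\ in_tri a b c (X l i) /\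
        exists t : R, X l i = padd (GL_point y z (g l i)) (pscale t eta)) ->
  forall (v : poly2), deg_le k v ->
  let hT := diamT a b c in
  let rT := pdist y z in
  let S := sum_f_R0 (fun l =>
             / rT ^ l * fmax l (fun i => Rabs (peval k (pdirn (k - l) eta v) (X l i)))) k in
  forall p : pt, in_tri a b c p ->
    Rabs (peval k v p) <= C * hT ^ k * S /\
    hT * gradnorm k v p <= C * hT ^ k * S.
Proof.
  intros g1 g2 Hc k Hk sigma.
  destruct (smooth_closed_curve_flat g1 g2 Hc) as [h0 [Bc [Hh0 [Hh01 [HBc Hflat]]]]].
  destruct (GL_nodes_uniform_upto k) as [G [dg [HG [Hdg HGL]]]].
  destruct (ucoef_bound k ((1 + G) / 2) (dg / 2)) as [Lam [HLam HLamP]]; [lra|lra|].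
  exists (element_const k G Bc Lam), h0.
  split; [apply element_const_pos; auto|]. split; [exact Hh0|].
  intros a b c HD _ Hh y z Hyz Hy Hz Hyb Hzb Hbd _ eta Heta Hez g X HGLn HX v Hv hT rT S p Hp.
  exact (element_estimate g1 g2 k h0 Bc G dg Lam Hk Hh01 HBc Hflat HG HGL HLam HLamP
    a b c y z eta g X v HD Hh Hyz Hy Hz Hyb Hzb Hbd Heta Hez HGLn HX Hv p Hp).
Qed.
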